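(* Let $\mathcal B$ be a bigroupoid acting on the right on a groupoid $\mathcal P$, and let $\Lambda\colon\mathcal P\triangleleft\mathcal B\to\mathcal B$ be the canonical strict projection homomorphism. Then the simplicial map $\Lambda_\bullet=N_2(\Lambda)\colon N_2(\mathcal P\triangleleft\mathcal B)\to N_2(\mathcal B)$ is an exact fibration in every dimension $n\ge2$.
   Context: A bigroupoid is a bicategory in which every 2-cell is invertible and every 1-cell is an equivalence. Let $\mathcal B$ be a bicategory with set of objects $B_0$, horizontal composition $\circ$, identity 1-cells $i_x$, associator $\alpha_{h,g,f}\colon(h\circ g)\circ f\Rightarrow h\circ(g\circ f)$, and unitors $\lambda_f\colon i_y\circ f\Rightarrow f$, $\rho_f\colon f\circ i_x\Rightarrow f$ for $f\colon x\to y$. Let $\mathcal B_1$ be the category whose objects are the 1-cells and whose morphisms are the 2-cells of $\mathcal B$ (under vertical composition), with source and target functors $D_1,D_0\colon\mathcal B_1\to B_0$ ($B_0$ viewed as a discrete category). In any category, composition of morphisms is written by juxtaposition. A right action of $\mathcal B$ on a category $\mathcal C$ consists of: a functor $\Lambda\colon\mathcal C\to B_0$ (the momentum); a functor $A\colon\mathcal C\times_{B_0}\mathcal B_1\to\mathcal C$, written $(p,f)\mapsto p\triangleleft f$ and $(a,\phi)\mapsto a\triangleleft\phi$, defined on pairs with $\Lambda(p)=D_0(f)$ (the target of $f$), such that $\Lambda(p\triangleleft f)=D_1(f)$ (the source of $f$); a natural isomorphism with components $\kappa_{p,f,g}\colon(p\triangleleft f)\triangleleft g\to p\triangleleft(f\circ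 g)$ (whenever $p\triangleleft f$ and $f\circ g$ are defined); and a natural isomorphism with components $\iota_p\colon p\triangleleft i_{\Lambda(p)}\to p$; such that (i) $(p\triangleleft\alpha_{f,g,h})\,\kappa_{p,f\circ g,h}\,(\kappa_{p,f,g}\triangleleft h)=\kappa_{p,f,g\circ h}\,\kappa_{p\triangleleft f,g,h}$ for all composable $p,f,g,h$; (ii) $(p\triangleleft\lambda_f)\,\kappa_{p,i_{\Lambda(p)},f}=\iota_p\triangleleft f$; (iii) $(p\triangleleft\rho_f)\,\kappa_{p,f,i_x}=\iota_{p\triangleleft f}$ where $x$ is the source of $f$. The action bicategory $\mathcal P\triangleleft\mathcal B$ of a right action on $\mathcal P$ has: objects the objects of $\mathcal P$; 1-cells $q\to p$ the pairs $(\psi,h)$ with $h\colon\Lambda(q)\to\Lambda(p)$ a 1-cell of $\mathcal B$ and $\psi\colon q\to p\triangleleft h$ in $\mathcal P$; 2-cells $\gamma\colon(\psi,h)\Rightarrow(\xi,l)$ the 2-cells $\gamma\colon h\Rightarrow l$ of $\mathcal B$ with $(p\triangleleft\gamma)\psi=\xi$; vertical composition and horizontal composition of 2-cells as in $\mathcal B$; composite of 1-cells $(\psi,h)\circ(\phi,g)=(\kappa_{p,h,g}(\psi\triangleleft g)\phi,\ h\circ g)$; identity 1-cell $(\iota_p^{-1},i_{\Lambda(p)})$; associator $\alpha_{h,g,f}$ and unitors $\lambda_h,\rho_h$ taken from $\mathcal B$. The canonical projection $\Lambda\colon\mathcal P\triangleleft\mathcal B\to\mathcal B$ is $p\mapsto\Lambda(p)$,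 $(\psi,h)\mapsto h$, $\gamma\mapsto\gamma$. The Duskin nerve $N_2(\mathcal C)$ of a bicategory $\mathcal C$ is the simplicial set with $N_2(\mathcal C)_n$ the set of normal (strictly unital) homomorphisms from $[n]$, regarded as a locally discrete 2-category (the poset $\{0<\dots<n\}$ with only identity 2-cells), to $\mathcal C$, with simplicial operators given by precomposition; a strict homomorphism acts by postcomposition. For a simplicial set $Y_\bullet$, the set of $k$-horns in dimension $n$ is $\bigwedge^k_n(Y_\bullet)=\{(y_0,\dots,y_{k-1},y_{k+1},\dots,y_n)\in Y_{n-1}^{n}\mid d_i(y_j)=d_{j-1}(y_i)\text{ for } i<j,\ i,j\neq k\}$, with horn map $p^k_n(y)=(d_0y,\dots,\widehat{d_ky},\dots,d_ny)$. A simplicial map $f_\bullet\colon E_\bullet\to Y_\bullet$ is an exact fibration in dimension $n$ if for every $0\le k\le n$ the square formed by $f_n\colon E_n\to Y_n$, the horn maps $p^k_n$, and the induced map $\bigwedge^k_n(E_\bullet)\to\bigwedge^k_n(Y_\bullet)$ is a pullback, i.e. the map $E_n\to\bigwedge^k_n(E_\bullet)\times_{\bigwedge^k_n(Y_\bullet)}Y_n$ is a bijection. *)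

From Stdlib Require Import ProofIrrelevance.
From mathcomp Require Import all_boot.
Set Implicit Arguments.
Unset Strict Implicit.
Unset Printing Implicit Defensive.

(* Bicategories (data + axioms).  Composition [comp1 g f] is "g after f"
   (written g o f in the paper); [vcomp b a] is "b after a" (juxtaposition
   b a in the paper).                                                   *)
Record BicatData := {
  ob : Type;
  hom : ob -> ob -> Type;
  cell : forall x y : ob, hom x y -> hom x y -> Type;
  id1 : forall x : ob, hom x x;
  comp1 : forall x y z : ob, hom y z -> hom x y -> hom x z;
  id2 : forall (x y : ob) (f : hom x y), cell f f;
  vcomp : forall (x y : ob) (f g h : hom x y), cell g h -> cell f g -> cell f h;
  hcomp2 : forall (x y z : ob) (f f' : hom x y) (g g' : hom y z),
      cell g g' -> cell f f' -> cell (comp1 g f) (comp1 g' f');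
  assoc : forall (w x y z : ob) (h : hom y z) (g : hom x y) (f : hom w x),
      cell (comp1 (comp1 h g) f) (comp1 h (comp1 g f));
  lunit : forall (x y : ob) (f : hom x y), cell (comp1 (id1 y) f) f;
  runit : forall (x y : ob) (f : hom x y), cell (comp1 f (id1 x)) f }.

Arguments hom {b} x y.
Arguments cell {b x y} f g.
Arguments id1 {b} x.
Arguments comp1 {b x y z} g f.
Arguments id2 {b x y} f.
Arguments vcomp {b x y f g h} _ _.
Arguments hcomp2 {b x y z f f' g g'} _ _.
Arguments assoc {b w x y z} h g f.
Arguments lunit {b x y} f.
Arguments runit {b x y} f.

Definition isoc (B : BicatData) (x y : ob B) (f g : hom x y) (a : cell f g) : Prop :=
  exists b : cell g f, vcomp b a = id2 f /\ vcomp a b = id2 g.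

Record BicatAxioms (B : BicatData) : Prop := {
  v_assoc : forall (x y : ob B) (f g h k : hom x y)
      (c : cell h k) (b : cell g h) (a : cell f g),
      vcomp c (vcomp b a) = vcomp (vcomp c b) a;
  v_idl : forall (x y : ob B) (f g : hom x y) (a : cell f g), vcomp (id2 g) a = a;
  v_idr : forall (x y : ob B) (f g : hom x y) (a : cell f g), vcomp a (id2 f) = a;
  h_id : forall (x y z : ob B) (f : hom x y) (g : hom y z),
      hcomp2 (id2 g) (id2 f) = id2 (comp1 g f);
  h_interchange : forall (x y z : ob B) (f f' f'' : hom x y) (g g' g'' : hom y z)
      (a : cell f f') (a' : cell f' f'') (b : cell g g') (b' : cell g' g''),
      hcomp2 (vcomp b' b) (vcomp a' a) = vcomp (hcomp2 b' a') (hcomp2 b a);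
  assoc_nat : forall (w x y z : ob B) (f f' : hom w x) (g g' : hom x y) (h h' : hom y z)
      (a : cell f f') (b : cell g g') (c : cell h h'),
      vcomp (assoc h' g' f') (hcomp2 (hcomp2 c b) a)
      = vcomp (hcomp2 c (hcomp2 b a)) (assoc h g f);
  lunit_nat : forall (x y : ob B) (f f' : hom x y) (a : cell f f'),
      vcomp (lunit f') (hcomp2 (id2 (id1 y)) a) = vcomp a (lunit f);
  runit_nat : forall (x y : ob B) (f f' : hom x y) (a : cell f f'),
      vcomp (runit f') (hcomp2 a (id2 (id1 x))) = vcomp a (runit f);
  assoc_iso : forall (w x y z : ob B) (h : hom y z) (g : hom x y) (f : hom w x),
      isoc (assoc h g f);
  lunit_iso : forall (x y : ob B) (f : hom x y), isoc (lunit f);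
  runit_iso : forall (x y : ob B) (f : hom x y), isoc (runit f);
  pentagon : forall (v w x y z : ob B) (f : hom v w) (g : hom w x) (h : hom x y) (k : hom y z),
      vcomp (assoc k h (comp1 g f)) (assoc (comp1 k h) g f)
      = vcomp (hcomp2 (id2 k) (assoc h g f))
          (vcomp (assoc k (comp1 h g) f) (hcomp2 (assoc k h g) (id2 f)));
  triangle : forall (x y z : ob B) (f : hom x y) (g : hom y z),
      vcomp (hcomp2 (id2 g) (lunit f)) (assoc g (id1 y) f) = hcomp2 (runit g) (id2 f) }.

Record Bicat := { bdata :> BicatData; baxioms : BicatAxioms bdata }.

Definition isBigroupoid (B : Bicat) : Prop :=
  (forall (x y : ob B) (f g : hom x y) (a : cell f g), isoc a) /\
  (forall (x y : ob B) (f : hom x y), exists g : hom y x,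
      exists (u : cell (comp1 g f) (id1 x)) (v : cell (comp1 f g) (id1 y)),
        isoc u /\ isoc v).

(* Categories; [ccomp g f] is "g after f" (juxtaposition g f).          *)
Record CatData := {
  cob : Type;
  chom : cob -> cob -> Type;
  cid : forall a : cob, chom a a;
  ccomp : forall a b c : cob, chom b c -> chom a b -> chom a c }.

Arguments chom {_} a b.
Arguments cid {_} a.
Arguments ccomp {_ _ _ _} g f.

Record CatAxioms (C : CatData) : Prop := {
  c_assoc : forall (a b c d : cob C) (h : chom c d) (g : chom b c) (f : chom a b),
      ccomp h (ccomp g f) = ccomp (ccomp h g) f;
  c_idl : forall (a b : cob C) (f : chom a b), ccomp (cid b) f = f;
  c_idr : forall (a b : cob C) (f : chom a b), ccomp f (cid a) = f }.

Record Cat := { cdata :> CatData; caxioms : CatAxioms cdata }.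

Definition isGroupoid (P : Cat) : Prop :=
  forall (a b : cob P) (f : chom a b),
    exists g : chom b a, ccomp g f = cid a /\ ccomp f g = cid b.

(* Right actions of a bicategory B on a category P.
   [mom] is the momentum Λ.  Objects of the fibred product C x_{B0} B1 are
   pairs (p, f) with f : x -> y a 1-cell and a proof [e : mom p = y] that
   Λ(p) is the target D_0(f); [act p f e] is p ◁ f.  Morphisms (a, φ) of the
   fibred product are pairs a : p -> q, φ : f => g with f, g : x -> y, and
   [actm a φ ep eq] is a ◁ φ.  Because the fibred-product conditions are
   carried as equality proofs, all axioms are quantified over these proofs
   (they are all equal by proof irrelevance).                          *)
Unset Implicit Arguments.
Record RightAction (B : Bicat) (P : Cat) := {
  mom : cob P -> ob B;
  (* Λ is a functor to the discrete category B0 *)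
  mom_hom : forall (p q : cob P) (a : chom p q), mom p = mom q;
  act : forall (p : cob P) (x y : ob B) (f : hom x y), mom p = y -> cob P;
  mom_act : forall (p : cob P) (x y : ob B) (f : hom x y) (e : mom p = y),
      mom (act p _ _ f e) = x;
  actm : forall (p q : cob P) (a : chom p q) (x y : ob B) (f g : hom x y)
      (ep : mom p = y) (eq : mom q = y), cell f g ->
      chom (act p _ _ f ep) (act q _ _ g eq);
  actm_id : forall (p : cob P) (x y : ob B) (f : hom x y) (e : mom p = y),
      actm _ _ (cid p) _ _ _ _ e e (id2 f) = cid (act p _ _ f e);
  actm_comp : forall (p q r : cob P) (a : chom p q) (b : chom q r) (x y : ob B)
      (f g h : hom x y) (ep : mom p = y) (eq : mom q = y) (er : mom r = y)
      (al : cell f g) (be : cell g h),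
      actm _ _ (ccomp b a) _ _ _ _ ep er (vcomp be al)
      = ccomp (actm _ _ b _ _ _ _ eq er be) (actm _ _ a _ _ _ _ ep eq al);
  kappa : forall (p : cob P) (x y z : ob B) (f : hom y z) (g : hom x y)
      (e : mom p = z) (e' : mom (act p _ _ f e) = y),
      chom (act (act p _ _ f e) _ _ g e') (act p _ _ (comp1 f g) e);
  kappa_nat : forall (p q : cob P) (a : chom p q) (x y z : ob B)
      (f f' : hom y z) (g g' : hom x y) (be : cell f f') (al : cell g g')
      (ep : mom p = z) (eq : mom q = z)
      (ep' : mom (act p _ _ f ep) = y) (eq' : mom (act q _ _ f' eq) = y),
      ccomp (actm _ _ a _ _ _ _ ep eq (hcomp2 be al)) (kappa p _ _ _ f g ep ep')
      = ccomp (kappa q _ _ _ f' g' eq eq')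
              (actm _ _ (actm _ _ a _ _ _ _ ep eq be) _ _ _ _ ep' eq' al);
  kappa_iso : forall (p : cob P) (x y z : ob B) (f : hom y z) (g : hom x y)
      (e : mom p = z) (e' : mom (act p _ _ f e) = y),
      exists k' : chom (act p _ _ (comp1 f g) e) (act (act p _ _ f e) _ _ g e'),
        ccomp k' (kappa p _ _ _ f g e e') = cid _ /\ ccomp (kappa p _ _ _ f g e e') k' = cid _;
  iota : forall (p : cob P) (y : ob B) (e : mom p = y), chom (act p _ _ (id1 y) e) p;
  iota_inv : forall (p : cob P) (y : ob B) (e : mom p = y), chom p (act p _ _ (id1 y) e);
  iota_inv_l : forall (p : cob P) (y : ob B) (e : mom p = y),
      ccomp (iota_inv p y e) (iota p y e) = cid _;
  iota_inv_r : forall (p : cob P) (y : ob B) (e : mom p = y),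
      ccomp (iota p y e) (iota_inv p y e) = cid p;
  iota_nat : forall (p q : cob P) (a : chom p q) (y : ob B) (ep : mom p = y) (eq : mom q = y),
      ccomp (iota q y eq) (actm _ _ a _ _ _ _ ep eq (id2 (id1 y))) = ccomp a (iota p y ep);
  act_ax1 : forall (p : cob P) (w x y z : ob B) (f : hom y z) (g : hom x y) (h : hom w x)
      (e : mom p = z) (e1 : mom (act p _ _ f e) = y)
      (e2 : mom (act (act p _ _ f e) _ _ g e1) = x)
      (e3 : mom (act p _ _ (comp1 f g) e) = x),
      ccomp (actm _ _ (cid p) _ _ _ _ e e (assoc f g h))
        (ccomp (kappa p _ _ _ (comp1 f g) h e e3)
               (actm _ _ (kappa p _ _ _ f g e e1) _ _ _ _ e2 e3 (id2 h)))
      = ccomp (kappa p _ _ _ f (comp1 g h) e e1) (kappa (act p _ _ f e) _ _ _ g h e1 e2);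
  act_ax2 : forall (p : cob P) (x y : ob B) (f : hom x y) (e : mom p = y)
      (e1 : mom (act p _ _ (id1 y) e) = y),
      ccomp (actm _ _ (cid p) _ _ _ _ e e (lunit f)) (kappa p _ _ _ (id1 y) f e e1)
      = actm _ _ (iota p y e) _ _ _ _ e1 e (id2 f);
  act_ax3 : forall (p : cob P) (x y : ob B) (f : hom x y) (e : mom p = y)
      (e1 : mom (act p _ _ f e) = x),
      ccomp (actm _ _ (cid p) _ _ _ _ e e (runit f)) (kappa p _ _ _ f (id1 x) e e1)
      = iota (act p _ _ f e) x e1 }.
Set Implicit Arguments.

Arguments mom {B P} _ p.
Arguments mom_hom {B P} _ {p q} a.
Arguments act {B P} _ p {x y} f _.
Arguments mom_act {B P} _ p {x y} f e.
Arguments actm {B P} _ {p q} a {x y f g} ep eq _.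
Arguments actm_id {B P} _ p {x y} f e.
Arguments actm_comp {B P} _ {p q r} a b {x y f g h} ep eq er al be.
Arguments kappa {B P} _ p {x y z} f g e e'.
Arguments kappa_nat {B P} _ {p q} a {x y z f f' g g'} be al ep eq ep' eq'.
Arguments iota {B P} _ p {y} e.
Arguments iota_inv {B P} _ p {y} e.
Arguments iota_inv_l {B P} _ p {y} e.
Arguments iota_inv_r {B P} _ p {y} e.
Arguments iota_nat {B P} _ {p q} a {y} ep eq.
Arguments act_ax1 {B P} _ p {w x y z} f g h e e1 e2 e3.
Arguments act_ax2 {B P} _ p {x y} f e e1.
Arguments act_ax3 {B P} _ p {x y} f e e1.

Arguments mom {B P} _ p.
Arguments mom_hom {B P} _ {p q} a.
Arguments act {B P} _ p {x y} f _.
Arguments mom_act {B P} _ p {x y} f e.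
Arguments actm {B P} _ {p q} a {x y f g} ep eq _.
Arguments actm_id {B P} _ p {x y} f e.
Arguments actm_comp {B P} _ {p q r} a b {x y f g h} ep eq er al be.
Arguments kappa {B P} _ p {x y z} f g e e'.
Arguments kappa_nat {B P} _ {p q} a {x y z f f' g g'} be al ep eq ep' eq'.
Arguments kappa_iso {B P} _ p {x y z} f g e e'.
Arguments iota {B P} _ p {y} e.
Arguments iota_inv {B P} _ p {y} e.
Arguments iota_inv_l {B P} _ p {y} e.
Arguments iota_inv_r {B P} _ p {y} e.
Arguments iota_nat {B P} _ {p q} a {y} ep eq.
Arguments act_ax1 {B P} _ p {w x y z} f g h e e1 e2 e3.
Arguments act_ax2 {B P} _ p {x y} f e e1.
Arguments act_ax3 {B P} _ p {x y} f e e1.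

Section ActionBicat.
Variables (B : Bicat) (P : Cat) (A : RightAction B P).

Let BA := baxioms B.
Let PA := caxioms P.

Definition ab_hom (q p : cob P) : Type :=
  {h : hom (mom A q) (mom A p) & chom q (act A p h erefl)}.

Definition ab_cell (q p : cob P) (u v : ab_hom q p) : Type :=
  {c : cell (projT1 u) (projT1 v) |
     ccomp (actm A (cid p) erefl erefl c) (projT2 u) = projT2 v}.

Definition ab_id1 (p : cob P) : ab_hom p p :=
  existT _ (id1 (mom A p)) (iota_inv A p erefl).

Definition ab_comp1 (r q p : cob P) (u : ab_hom q p) (w : ab_hom r q) : ab_hom r p :=
  existT _ (comp1 (projT1 u) (projT1 w))
    (ccomp (kappa A p (projT1 u) (projT1 w) erefl (mom_act A p (projT1 u) erefl))
       (ccomp (actm A (projT2 u) erefl (mom_act A p (projT1 u) erefl) (id2 (projT1 w)))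
          (projT2 w))).

Lemma ab_id2_ok (q p : cob P) (u : ab_hom q p) :
  ccomp (actm A (cid p) erefl erefl (id2 (projT1 u))) (projT2 u) = projT2 u.
Proof. by rewrite actm_id (c_idl PA). Qed.

Definition ab_id2 (q p : cob P) (u : ab_hom q p) : ab_cell u u :=
  exist _ (id2 (projT1 u)) (ab_id2_ok u).

Lemma ab_vcomp_ok (q p : cob P) (u v w : ab_hom q p) (b : ab_cell v w) (a : ab_cell u v) :
  ccomp (actm A (cid p) erefl erefl (vcomp (proj1_sig b) (proj1_sig a))) (projT2 u)
  = projT2 w.
Proof.
case: b a => b Hb [a Ha] /=.
by rewrite -{1}(c_idl PA (cid p)) actm_comp -(c_assoc PA) Ha Hb.
Qed.

Definition ab_vcomp (q p : cob P) (u v w : ab_hom q p) (b : ab_cell v w) (a : ab_cell u v)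
  : ab_cell u w := exist _ (vcomp (proj1_sig b) (proj1_sig a)) (ab_vcomp_ok b a).


Lemma ab_hcomp2_ok (r q p : cob P) (w w' : ab_hom r q) (u v : ab_hom q p)
      (c : ab_cell u v) (d : ab_cell w w') :
  ccomp (actm A (cid p) erefl erefl (hcomp2 (proj1_sig c) (proj1_sig d)))
        (projT2 (ab_comp1 u w)) = projT2 (ab_comp1 v w').
Proof.
case: c d => c Hc [d Hd] /=.
rewrite (c_assoc PA) (kappa_nat A (cid p) c d erefl erefl
          (mom_act A p (projT1 u) erefl) (mom_act A p (projT1 v) erefl)).
rewrite -(c_assoc PA); congr (ccomp _ _).
rewrite (c_assoc PA) -actm_comp Hc (v_idr BA).
by rewrite -Hd (c_assoc PA) -actm_comp (c_idr PA) (v_idl BA).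
Qed.

Definition ab_hcomp2 (r q p : cob P) (w w' : ab_hom r q) (u v : ab_hom q p)
      (c : ab_cell u v) (d : ab_cell w w') : ab_cell (ab_comp1 u w) (ab_comp1 v w') :=
  exist _ (hcomp2 (proj1_sig c) (proj1_sig d)) (ab_hcomp2_ok c d).


Lemma actm_comp_id (p q r : cob P) (a : chom p q) (b : chom q r) (x y : ob B)
      (f : hom x y) (ep : mom A p = y) (eq : mom A q = y) (er : mom A r = y) :
  actm A (ccomp b a) ep er (id2 f) = ccomp (actm A b eq er (id2 f)) (actm A a ep eq (id2 f)).
Proof. by rewrite -actm_comp (v_idl BA). Qed.

Lemma ab_assoc_ok (s r q p : cob P) (u : ab_hom q p) (w : ab_hom r q) (t : ab_hom s r) :
  ccomp (actm A (cid p) erefl erefl (assoc (projT1 u) (projT1 w) (projT1 t)))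
        (projT2 (ab_comp1 (ab_comp1 u w) t)) = projT2 (ab_comp1 u (ab_comp1 w t)).
Proof.
case: u w t => h psi [g phi] [f chi] /=.
set Eh := mom_act A p h erefl.
set Eg := mom_act A q g erefl.
set Ehg := mom_act A p (comp1 h g) erefl.
set E2 := mom_act A (act A p h erefl) g Eh.
rewrite (actm_comp_id _ _ _ _ E2) (actm_comp_id _ _ _ _ Eg).
have H := act_ax1 A p h g f erefl Eh E2 Ehg.
rewrite (c_assoc PA) in H.
rewrite !(c_assoc PA) H -(c_assoc PA (kappa A p h (comp1 g f) erefl Eh)).
have K := kappa_nat A psi (id2 g) (id2 f) erefl Eh Eg E2.
rewrite (h_id BA) in K.
by rewrite -K !(c_assoc PA).
Qed.

Definition ab_assoc (s r q p : cob P) (u : ab_hom q p) (w : ab_hom r q) (t : ab_hom s r)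
  : ab_cell (ab_comp1 (ab_comp1 u w) t) (ab_comp1 u (ab_comp1 w t)) :=
  exist _ (assoc (projT1 u) (projT1 w) (projT1 t)) (ab_assoc_ok u w t).

Lemma ab_lunit_ok (q p : cob P) (u : ab_hom q p) :
  ccomp (actm A (cid p) erefl erefl (lunit (projT1 u))) (projT2 (ab_comp1 (ab_id1 p) u))
  = projT2 u.
Proof.
case: u => h psi /=.
rewrite (c_assoc PA) act_ax2 (c_assoc PA) -actm_comp iota_inv_r (v_idl BA) actm_id.
by rewrite (c_idl PA).
Qed.

Definition ab_lunit (q p : cob P) (u : ab_hom q p) : ab_cell (ab_comp1 (ab_id1 p) u) u :=
  exist _ (lunit (projT1 u)) (ab_lunit_ok u).

Lemma ab_runit_ok (q p : cob P) (u : ab_hom q p) :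
  ccomp (actm A (cid p) erefl erefl (runit (projT1 u))) (projT2 (ab_comp1 u (ab_id1 q)))
  = projT2 u.
Proof.
case: u => h psi /=.
rewrite (c_assoc PA) act_ax3 (c_assoc PA) iota_nat -(c_assoc PA) iota_inv_r.
by rewrite (c_idr PA).
Qed.

Definition ab_runit (q p : cob P) (u : ab_hom q p) : ab_cell (ab_comp1 u (ab_id1 q)) u :=
  exist _ (runit (projT1 u)) (ab_runit_ok u).

Definition ActionBicat : BicatData :=
  {| ob := cob P;
     hom := ab_hom;
     cell := ab_cell;
     id1 := ab_id1;
     comp1 := ab_comp1;
     id2 := ab_id2;
     vcomp := ab_vcomp;
     hcomp2 := ab_hcomp2;
     assoc := ab_assoc;
     lunit := ab_lunit;
     runit := ab_runit |}.

End ActionBicat.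

Arguments ActionBicat {B P} A.

Unset Implicit Arguments.
Record HomData (C D : BicatData) := {
  F0 : ob C -> ob D;
  F1 : forall x y : ob C, hom x y -> hom (F0 x) (F0 y);
  F2 : forall (x y : ob C) (f g : hom x y), cell f g -> cell (F1 x y f) (F1 x y g);
  Fcomp : forall (x y z : ob C) (f : hom x y) (g : hom y z),
      cell (comp1 (F1 y z g) (F1 x y f)) (F1 x z (comp1 g f));
  Funit : forall x : ob C, cell (id1 (F0 x)) (F1 x x (id1 x)) }.
Set Implicit Arguments.

Arguments F0 {C D} h x.
Arguments F1 {C D} h {x y} f.
Arguments F2 {C D} h {x y f g} a.
Arguments Fcomp {C D} h {x y z} f g.
Arguments Funit {C D} h x.

Record isHom (C D : BicatData) (F : HomData C D) : Prop := {
  F2_id : forall (x y : ob C) (f : hom x y), F2 F (id2 f) = id2 (F1 F f);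
  F2_comp : forall (x y : ob C) (f g h : hom x y) (b : cell g h) (a : cell f g),
      F2 F (vcomp b a) = vcomp (F2 F b) (F2 F a);
  Fcomp_nat : forall (x y z : ob C) (f f' : hom x y) (g g' : hom y z)
      (a : cell f f') (b : cell g g'),
      vcomp (Fcomp F f' g') (hcomp2 (F2 F b) (F2 F a))
      = vcomp (F2 F (hcomp2 b a)) (Fcomp F f g);
  F_assoc : forall (w x y z : ob C) (f : hom w x) (g : hom x y) (h : hom y z),
      vcomp (F2 F (assoc h g f))
            (vcomp (Fcomp F f (comp1 h g)) (hcomp2 (Fcomp F g h) (id2 (F1 F f))))
      = vcomp (Fcomp F (comp1 g f) h)
            (vcomp (hcomp2 (id2 (F1 F h)) (Fcomp F f g)) (assoc (F1 F h) (F1 F g) (F1 F f)));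
  F_lunit : forall (x y : ob C) (f : hom x y),
      vcomp (F2 F (lunit f)) (vcomp (Fcomp F f (id1 y)) (hcomp2 (Funit F y) (id2 (F1 F f))))
      = lunit (F1 F f);
  F_runit : forall (x y : ob C) (f : hom x y),
      vcomp (F2 F (runit f)) (vcomp (Fcomp F (id1 x) f) (hcomp2 (id2 (F1 F f)) (Funit F x)))
      = runit (F1 F f);
  Fcomp_iso : forall (x y z : ob C) (f : hom x y) (g : hom y z), isoc (Fcomp F f g);
  Funit_iso : forall x : ob C, isoc (Funit F x) }.

Definition isNormal (C D : BicatData) (F : HomData C D) : Prop :=
  forall x : ob C, exists e : F1 F (id1 x) = id1 (F0 F x),
    Funit F x = match esym e in (_ = g) return cell (id1 (F0 F x)) g with
                | erefl => id2 (id1 (F0 F x)) end.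

Definition compH (C D E : BicatData) (G : HomData D E) (F : HomData C D) : HomData C E :=
  {| F0 := fun x => F0 G (F0 F x);
     F1 := fun x y f => F1 G (F1 F f);
     F2 := fun x y f g a => F2 G (F2 F a);
     Fcomp := fun x y z f g => vcomp (F2 G (Fcomp F f g)) (Fcomp G (F1 F f) (F1 F g));
     Funit := fun x => vcomp (F2 G (Funit F x)) (Funit G (F0 F x)) |}.

Definition projH (B : Bicat) (P : Cat) (A : RightAction B P) : HomData (ActionBicat A) B :=
  @Build_HomData (ActionBicat A) B
     (mom A)
     (fun q p u => projT1 u)
     (fun q p u v c => proj1_sig c)
     (fun r q p w u => id2 (comp1 (projT1 u) (projT1 w)))
     (fun p => id2 (id1 (mom A p))).

(* The ordinal [n] = {0 < ... < n} as a locally discrete 2-category;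
   [PosetBicat m] has objects 'I_m, so [n] is [PosetBicat n.+1].       *)
Definition PosetBicat (m : nat) : BicatData :=
  {| ob := 'I_m;
     hom := fun i j => is_true (i <= j);
     cell := fun i j f g => unit;
     id1 := fun i => leqnn i;
     comp1 := fun i j k g f => leq_trans f g;
     id2 := fun _ _ _ => tt;
     vcomp := fun _ _ _ _ _ _ _ => tt;
     hcomp2 := fun _ _ _ _ _ _ _ _ _ => tt;
     assoc := fun _ _ _ _ _ _ _ => tt;
     lunit := fun _ _ _ => tt;
     runit := fun _ _ _ => tt |}.

Lemma lift_mono (m : nat) (i : 'I_m.+1) (j k : 'I_m) : j <= k -> lift i j <= lift i k.
Proof. by rewrite /= leq_bump2. Qed.

Definition coface (m : nat) (i : 'I_m.+1) : HomData (PosetBicat m) (PosetBicat m.+1) :=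
  @Build_HomData (PosetBicat m) (PosetBicat m.+1)
     (fun j : 'I_m => lift i j)
     (fun (j k : 'I_m) (h : is_true (j <= k)) => lift_mono i h)
     (fun _ _ _ _ _ => tt)
     (fun _ _ _ _ _ => tt)
     (fun _ => tt).

(* Duskin nerve: N_2(C)_n = normal homomorphisms [n] -> C,
   here [Nerve C n.+1].  Face maps d_i are precomposition with δ_i.      *)
Definition Nerve (C : BicatData) (m : nat) : Type :=
  {F : HomData (PosetBicat m) C | isHom F /\ isNormal F}.

Definition dface (C : BicatData) (m : nat) (i : 'I_m.+1)
  (F : HomData (PosetBicat m.+1) C) : HomData (PosetBicat m) C := compH F (coface i).

(* The simplicial map N_2(G) : N_2(E) -> N_2(Y) induced by a homomorphism G
   (postcomposition) is an exact fibration in dimension n: the canonical map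
   E_n -> Λ^k_n(E) x_{Λ^k_n(Y)} Y_n is a bijection for every 0 <= k <= n.                              *)
Definition exact_fibration_dim (E Y : BicatData) (G : HomData E Y) (n : nat) : Prop :=
  match n with
  | 0 => forall y : Nerve Y 1, exists! x : Nerve E 1, compH G (proj1_sig x) = proj1_sig y
  | m.+1 =>
    forall (k : 'I_m.+2) (hrn : forall j : 'I_m.+2, j != k -> Nerve E m.+1)
           (y : Nerve Y m.+2),
      (forall (i j : 'I_m.+2) (hi : i != k) (hj : j != k), i < j ->
         dface (inord i) (proj1_sig (hrn j hj)) = dface (inord j.-1) (proj1_sig (hrn i hi))) ->
      (forall (j : 'I_m.+2) (hj : j != k),
         compH G (proj1_sig (hrn j hj)) = dface j (proj1_sig y)) ->
      exists! x : Nerve E m.+2,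
        (forall (j : 'I_m.+2) (hj : j != k), dface j (proj1_sig x) = proj1_sig (hrn j hj))
        /\ compH G (proj1_sig x) = proj1_sig y
  end.

(** Fix a [k]-horn of [N_2(P ◁ B)] in dimension [n = s+2] and an [n]-simplex
    [Y] of [N_2(B)] below it.  A normal homomorphism [[n] → P ◁ B] over [Y]
    amounts to objects [pt v] of [P] over the vertices of [Y] and
    [P]-components of its edges over the edges of [Y], such that every 2-cell
    of [Y] lifts to a 2-cell of [P ◁ B] ([Lifts]); 2-cells of [P ◁ B] are
    determined by their image in [B], so nothing else has to be chosen.
    - Vertices and edges lying in a horn face are forced by the horn.
    - The only other edge (opposite [k], in dimension 2) is forced by the
      unique completion of the triangle through [k]: [P] is a groupoid and
      acting by an equivalence of [B] is fully faithful.
    - Every triangle lifts: inside a horn face by hypothesis, degenerate ones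
      by the unit laws, the one through [k] (dimension 2) by construction,
      and one avoiding [k] because it is a face of a tetrahedron whose three
      other faces lift (cocycle lemmas).
    - The same forcing arguments show that the filler is unique. *)

From Pilot Require Import Defs.
From mathcomp Require Import all_boot zify.
From Stdlib Require Import ProofIrrelevance FunctionalExtensionality Eqdep ClassicalEpsilon.

Set Implicit Arguments.
Unset Strict Implicit.
Unset Printing Implicit Defensive.

(** Faces of simplices live over
    different index categories, so their 1- and 2-cells have types that
    are only propositionally equal.  We compare them after packing a cell
    with its boundary into a dependent pair. *)
Section TotalCells.
Variable D : BicatData.

Definition Tot1 := {xy : ob D * ob D & hom xy.1 xy.2}.
Definition tot1 (x y : ob D) (f : hom x y) : Tot1 :=
  existT (fun xy : ob D * ob D => hom xy.1 xy.2) (x, y) f.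

Definition Bdry2 := {xy : ob D * ob D & (hom xy.1 xy.2 * hom xy.1 xy.2)%type}.
Definition Tot2 := {t : Bdry2 & cell (projT2 t).1 (projT2 t).2}.
Definition tot2 (x y : ob D) (f g : hom x y) (c : cell f g) : Tot2 :=
  existT (fun t : Bdry2 => cell (projT2 t).1 (projT2 t).2)
    (existT (fun xy : ob D * ob D => (hom xy.1 xy.2 * hom xy.1 xy.2)%type) (x, y) (f, g)) c.

Lemma tot1_inj (x y : ob D) (f g : hom x y) : tot1 f = tot1 g -> f = g.
Proof. exact: inj_pair2. Qed.

Lemma tot2_inj (x y : ob D) (f g : hom x y) (c d : cell f g) : tot2 c = tot2 d -> c = d.
Proof. exact: inj_pair2. Qed.

Lemma tot1_ends (x y x' y' : ob D) (f : hom x y) (f' : hom x' y') :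
  tot1 f = tot1 f' -> x = x' /\ y = y'.
Proof. by move/(f_equal (@projT1 _ _)); case. Qed.

Lemma tot2_id2 (x y x' y' : ob D) (f : hom x y) (f' : hom x' y') :
  tot1 f = tot1 f' -> tot2 (id2 f) = tot2 (id2 f').
Proof.
move=> E; case: (tot1_ends E) => ex ey; subst x' y'.
by rewrite (tot1_inj E).
Qed.

Definition eq2 (x y : ob D) (f g : hom x y) (e : f = g) : cell f g :=
  match e in _ = g return cell f g with erefl => id2 f end.

Lemma tot2_id1 (x x' : ob D) : x = x' -> tot2 (id2 (id1 x)) = tot2 (id2 (id1 x')).
Proof. by move=> ->. Qed.

End TotalCells.

Arguments tot1 {D x y} f.
Arguments tot2 {D x y f g} c.
Arguments eq2 {D x y f g} e.

Lemma hom_ext (C D : BicatData) (X Y : HomData C D) :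
  (forall x, F0 X x = F0 Y x) ->
  (forall x y (f : hom x y), tot1 (F1 X f) = tot1 (F1 Y f)) ->
  (forall x y (f g : hom x y) (a : cell f g), tot2 (F2 X a) = tot2 (F2 Y a)) ->
  (forall x y z (f : hom x y) (g : hom y z), tot2 (Fcomp X f g) = tot2 (Fcomp Y f g)) ->
  (forall x, tot2 (Funit X x) = tot2 (Funit Y x)) -> X = Y.
Proof.
case: X => a b c d e; case: Y => a' b' c' d' e' /= H0 H1 H2 H3 H4.
have Ea : a = a' := functional_extensionality _ _ H0; subst a'.
have Eb : b = b'.
  by do 3 (apply: functional_extensionality_dep => ?); exact: tot1_inj (H1 _ _ _).
subst b'.
have Ec : c = c'.
  by do 5 (apply: functional_extensionality_dep => ?); exact: tot2_inj (H2 _ _ _ _ _).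
have Ed : d = d'.
  by do 5 (apply: functional_extensionality_dep => ?); exact: tot2_inj (H3 _ _ _ _ _).
have Ee : e = e'.
  by apply: functional_extensionality_dep => ?; exact: tot2_inj (H4 _).
by subst.
Qed.

Section HomEqComponents.
Variables (C D : BicatData) (X Y : HomData C D) (E : X = Y).

Lemma hom_eq0 x : F0 X x = F0 Y x.
Proof. by rewrite E. Qed.

Lemma hom_eq1 x y (f : hom x y) : tot1 (F1 X f) = tot1 (F1 Y f).
Proof. by rewrite E. Qed.

Lemma hom_eq_comp x y z (f : hom x y) (g : hom y z) : tot2 (Fcomp X f g) = tot2 (Fcomp Y f g).
Proof. by rewrite E. Qed.
End HomEqComponents.

(** Homomorphisms out of the poset [PosetBicat N]: since hom-sets of the
    poset are proof-irrelevant and 2-cells trivial, the data only depend on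
    the endpoints, and the 2-cell parts are identities. *)
Section PosetHoms.
Variables (N : nat) (D : BicatData) (X : HomData (PosetBicat N) D).

Lemma F1_idx (i j i' j' : 'I_N) (h : i <= j) (h' : i' <= j') :
  i = i' -> j = j' -> tot1 (@F1 _ _ X i j h) = tot1 (@F1 _ _ X i' j' h').
Proof. by move=> E1 E2; subst i' j'; rewrite (bool_irrelevance h h'). Qed.

Lemma Fcomp_idx (i j l i' j' l' : 'I_N) (f : i <= j) (g : j <= l) (f' : i' <= j') (g' : j' <= l') :
  i = i' -> j = j' -> l = l' -> tot2 (@Fcomp _ _ X i j l f g) = tot2 (@Fcomp _ _ X i' j' l' f' g').
Proof. by move=> E1 E2 E3; subst; rewrite (bool_irrelevance f f') (bool_irrelevance g g'). Qed.

Hypothesis HX : isHom X.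

Lemma F2_trivial (i j : 'I_N) (h : i <= j) (a : @cell (PosetBicat N) i j h h) :
  F2 X a = id2 (@F1 _ _ X i j h).
Proof. by case: a; rewrite -(F2_id HX). Qed.

Lemma F2_tot (i j : 'I_N) (h1 h2 : i <= j) (a : @cell (PosetBicat N) i j h1 h2) :
  tot2 (F2 X a) = tot2 (id2 (@F1 _ _ X i j h1)).
Proof. by move: a; rewrite -(bool_irrelevance h1 h2) => a; rewrite F2_trivial. Qed.

Lemma F2_vcomp_tot
  (hv : forall (x y : ob D) (f g : hom x y) (a : cell f g), vcomp (id2 g) a = a)
  (i j : 'I_N) (h1 h2 : i <= j) (a : @cell (PosetBicat N) i j h1 h2)
  (f : @hom D (F0 X i) (F0 X j)) (c : cell f (@F1 _ _ X i j h1)) :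
  tot2 (vcomp (F2 X a) c) = tot2 c.
Proof. by move: a; rewrite -(bool_irrelevance h1 h2) => a; rewrite F2_trivial hv. Qed.

End PosetHoms.

Lemma Funit_tot (N : nat) (D : BicatData) (X : HomData (PosetBicat N) D)
    (x : ob (PosetBicat N)) :
  isNormal X -> tot2 (Funit X x) = tot2 (id2 (id1 (F0 X x))).
Proof.
case/(_ x) => e ->.
by move: e; move: (F1 X (id1 x)) => u e; subst u.
Qed.

(** A 2-cell of [P ◁ B] is a 2-cell
    of [B] subject to a condition in [P]; the condition for a triangle
    [w ∘ u ⇒ v] is [Lifts], and the whole 2-dimensional structure of
    [P ◁ B] reduces to checking such conditions. *)
Section ActionCells.
Variables (B : Bicat) (P : Cat) (A : RightAction B P).
Local Notation E := (ActionBicat A).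
Let BA := baxioms B.
Let PA := caxioms P.

Definition etot (q p : cob P) (u : ab_hom A q p) : Tot1 E := @tot1 E q p u.
Definition mkE (q p : cob P) (h : hom (mom A q) (mom A p)) (psi : chom q (act A p h erefl))
  : ab_hom A q p := existT (fun h => chom q (act A p h erefl)) h psi.

Lemma ab_cell_eq (q p : cob P) (u v : ab_hom A q p) (c d : ab_cell u v) :
  proj1_sig c = proj1_sig d -> c = d.
Proof.
case: c d => c Hc [d Hd] /= Ecd; subst d.
by rewrite (proof_irrelevance _ Hc Hd).
Qed.

(* [be : h ∘ g ⇒ f] underlies a 2-cell [w ∘ u ⇒ v] of P ◁ B *)
Definition Lifts (q r p : cob P) (u : ab_hom A q r) (w : ab_hom A r p) (v : ab_hom A q p)
  (be : cell (comp1 (projT1 w) (projT1 u)) (projT1 v)) : Prop :=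
  ccomp (actm A (cid p) erefl erefl be) (projT2 (ab_comp1 w u)) = projT2 v.

Lemma etot_ends q p q' p' (u : ab_hom A q p) (u' : ab_hom A q' p') :
  etot u = etot u' -> q = q' /\ p = p'.
Proof. exact: (@tot1_ends E). Qed.

Lemma etot_inj q p (u u' : ab_hom A q p) : etot u = etot u' -> u = u'.
Proof. exact: (@tot1_inj E). Qed.

Lemma mkE_inj q p (h : hom (mom A q) (mom A p)) (psi psi' : chom q (act A p h erefl)) :
  etot (mkE psi) = etot (mkE psi') -> psi = psi'.
Proof. by move/etot_inj; exact: inj_pair2. Qed.

Lemma retype q p q' p' (u' : ab_hom A q' p') (h : hom (mom A q) (mom A p)) :
  q' = q -> p' = p -> tot1 (projT1 u') = tot1 h ->
  exists psi, etot (mkE (h:=h) psi) = etot u'.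
Proof.
move=> E1 E2; subst q' p' => /(@tot1_inj B) Eh; subst h.
by case: u' => h psi; exists psi.
Qed.

Lemma etot_comp r q p r' q' p' (u : ab_hom A q p) (w : ab_hom A r q)
  (u' : ab_hom A q' p') (w' : ab_hom A r' q') :
  etot u = etot u' -> etot w = etot w' -> etot (ab_comp1 u w) = etot (ab_comp1 u' w').
Proof.
move=> Eu Ew; case: (etot_ends Eu) => E1 E2; case: (etot_ends Ew) => E3 E4; subst.
by rewrite (etot_inj Eu) (etot_inj Ew).
Qed.

Lemma etot_id1 p p' : p = p' -> etot (ab_id1 A p) = etot (ab_id1 A p').
Proof. by move=> ->. Qed.

Lemma ab_tot2 q p q' p' (u v : ab_hom A q p) (u' v' : ab_hom A q' p')
  (c : ab_cell u v) (c' : ab_cell u' v') :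
  etot u = etot u' -> etot v = etot v' -> tot2 (proj1_sig c) = tot2 (proj1_sig c') ->
  @tot2 E _ _ _ _ c = @tot2 E _ _ _ _ c'.
Proof.
move=> Eu Ev; case: (etot_ends Eu) => E1 E2; subst q' p'.
move: c'; rewrite -(etot_inj Eu) -(etot_inj Ev) => c' /(@tot2_inj B) Ec.
by rewrite (ab_cell_eq Ec).
Qed.

Lemma lifts_transfer q r p q' r' p' (u : ab_hom A q r) (w : ab_hom A r p) (v : ab_hom A q p)
  (be : cell (comp1 (projT1 w) (projT1 u)) (projT1 v))
  (u' : ab_hom A q' r') (w' : ab_hom A r' p') (v' : ab_hom A q' p')
  (be' : cell (comp1 (projT1 w') (projT1 u')) (projT1 v')) :
  etot u = etot u' -> etot w = etot w' -> etot v = etot v' -> tot2 be = tot2 be' ->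
  Lifts be -> Lifts be'.
Proof.
move=> Eu Ew Ev; case: (etot_ends Eu) => E1 E2; case: (etot_ends Ew) => E3 E4; subst.
move: be'; rewrite -(etot_inj Eu) -(etot_inj Ew) -(etot_inj Ev) => be' /(@tot2_inj B) ->.
done.
Qed.

Lemma actm_cid_comp (p : cob P) (x y : ob B) (f g h : hom x y) (e : mom A p = y)
  (b : cell g h) (a : cell f g) :
  actm A (cid p) e e (vcomp b a) = ccomp (actm A (cid p) e e b) (actm A (cid p) e e a).
Proof. by rewrite -actm_comp (c_idl PA). Qed.

Lemma lifts_runit q p (u0 : ab_hom A q q) (e : u0 = ab_id1 A q) (w v : ab_hom A q p)
  (ev : v = w) (be : cell (comp1 (projT1 w) (projT1 u0)) (projT1 v)) :
  vcomp (eq2 (f_equal (@projT1 _ _) ev))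
    (vcomp be (hcomp2 (id2 (projT1 w)) (eq2 (esym (f_equal (@projT1 _ _) e)))))
  = runit (projT1 w) -> Lifts be.
Proof.
subst v u0 => /= H.
rewrite (h_id BA) (v_idl BA) (v_idr BA) in H; subst be.
exact: ab_runit_ok.
Qed.

Lemma lifts_lunit q p (u : ab_hom A q p) (w0 : ab_hom A p p) (e : w0 = ab_id1 A p)
  (v : ab_hom A q p) (ev : v = u) (be : cell (comp1 (projT1 w0) (projT1 u)) (projT1 v)) :
  vcomp (eq2 (f_equal (@projT1 _ _) ev))
    (vcomp be (hcomp2 (eq2 (esym (f_equal (@projT1 _ _) e))) (id2 (projT1 u))))
  = lunit (projT1 u) -> Lifts be.
Proof.
subst v w0 => /= H.
rewrite (h_id BA) (v_idl BA) (v_idr BA) in H; subst be.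
exact: ab_lunit_ok.
Qed.

Hypothesis HP : isGroupoid P.

Lemma groupoid_mono (a b c : cob P) (f : chom b c) (x y : chom a b) :
  ccomp f x = ccomp f y -> x = y.
Proof.
case: (HP f) => g [Hgf _] E.
by rewrite -(c_idl PA x) -(c_idl PA y) -Hgf -!(c_assoc PA) E.
Qed.

Lemma groupoid_epi (a b c : cob P) (f : chom a b) (x y : chom b c) : ccomp x f = ccomp y f -> x = y.
Proof.
case: (HP f) => g [_ Hfg] E.
by rewrite -(c_idr PA x) -(c_idr PA y) -Hfg !(c_assoc PA) E.
Qed.

Lemma groupoid_solve_l (a b c : cob P) (f : chom b c) (y : chom a c) : exists x, ccomp f x = y.
Proof.
case: (HP f) => g [_ Hfg]; exists (ccomp g y).
by rewrite (c_assoc PA) Hfg (c_idl PA).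
Qed.

Lemma groupoid_solve_r (a b c : cob P) (f : chom a b) (y : chom a c) : exists x, ccomp x f = y.
Proof.
case: (HP f) => g [Hgf _]; exists (ccomp y g).
by rewrite -(c_assoc PA) Hgf (c_idr PA).
Qed.

Lemma ab_cell_iso (HB2 : forall (x y : ob B) (f g : hom x y) (a : cell f g), isoc a)
  (q p : cob P) (u v : ab_hom A q p) (c : ab_cell u v) : @isoc E q p u v c.
Proof.
case: c => be Hbe; case: (HB2 _ _ _ _ be) => be' [H1 H2].
have Hbe' : ccomp (actm A (cid p) erefl erefl be') (projT2 v) = projT2 u.
  by rewrite -Hbe (c_assoc PA) -actm_cid_comp H1 actm_id (c_idl PA).
by exists (exist _ be' Hbe'); split; apply: ab_cell_eq.
Qed.

(** Acting by an equivalence [f] of [B] is fully faithful on [P]: with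
    [v : f ∘ g ⇒ id1 y] the counit, [eta] is a morphism [(p ◁ f) ◁ g → p]
    natural in [p], invertible because [P] is a groupoid. *)
Section ActEquivalence.
Variables (x y : ob B) (f : hom x y) (g : hom y x) (v : cell (comp1 f g) (id1 y)).

Definition eta (p : cob P) (ep : mom A p = y) :
  chom (act A (act A p f ep) g (mom_act A p f ep)) p :=
  ccomp (Defs.iota A p ep) (ccomp (actm A (cid p) ep ep v) (kappa A p f g ep (mom_act A p f ep))).

Lemma eta_nat (p q : cob P) (a : chom p q) (ep : mom A p = y) (eq : mom A q = y) :
  ccomp (eta eq) (actm A (actm A a ep eq (id2 f)) (mom_act A p f ep) (mom_act A q f eq) (id2 g))
  = ccomp a (eta ep).
Proof.
rewrite /eta -!(c_assoc PA).
rewrite -(kappa_nat A a (id2 f) (id2 g) ep eq (mom_act A p f ep) (mom_act A q f eq)).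
rewrite (h_id BA) !(c_assoc PA); congr (ccomp _ _).
rewrite -(c_assoc PA (Defs.iota A q eq)) -actm_comp (c_idl PA) (v_idr BA).
rewrite -{1}(c_idr PA a) -{1}(v_idl BA v) actm_comp.
by rewrite !(c_assoc PA) (iota_nat A a ep eq).
Qed.

Lemma act_faithful_of (p q : cob P) (a b : chom p q) (ep : mom A p = y) (eq : mom A q = y) :
  actm A a ep eq (id2 f) = actm A b ep eq (id2 f) -> a = b.
Proof. by move=> Eab; apply: (@groupoid_epi _ _ _ (eta ep)); rewrite -!eta_nat Eab. Qed.

End ActEquivalence.

Definition Faithful (x y : ob B) (h : hom x y) : Prop :=
  forall (p q : cob P) (a b : chom p q) (ep : mom A p = y) (eq : mom A q = y),
    actm A a ep eq (id2 h) = actm A b ep eq (id2 h) -> a = b.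

Definition Full (x y : ob B) (h : hom x y) : Prop :=
  forall (p q : cob P) (ep : mom A p = y) (eq : mom A q = y)
         (c : chom (act A p h ep) (act A q h eq)),
    exists a, actm A a ep eq (id2 h) = c.

(* acting by an equivalence is fully faithful; for fullness, a preimage
   built with [eta] is checked using faithfulness of acting by the inverse *)
Lemma act_equiv_fully_faithful (x y : ob B) (h : hom x y) :
  (exists g : hom y x, exists (u : cell (comp1 g h) (id1 x)) (v : cell (comp1 h g) (id1 y)),
     isoc u /\ isoc v) -> Faithful h /\ Full h.
Proof.
case=> g [u [v _]]; split=> p q.
  by move=> a b ep eq; exact: (act_faithful_of v).
move=> ep eq c.
have [a Ha] := groupoid_solve_r (eta v ep)
  (ccomp (eta v eq) (actm A c (mom_act A p h ep) (mom_act A q h eq) (id2 g))).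
exists a; apply: (act_faithful_of u (ep := mom_act A p h ep) (eq := mom_act A q h eq)).
by apply: (@groupoid_mono _ _ _ (eta v eq)); rewrite eta_nat Ha.
Qed.

(** For a 3-simplex of P ◁ B over a 3-simplex of B (the
    cocycle identity [Hcoc]), any three of the four triangle conditions
    imply the fourth; deducing the face opposite vertex 0 uses that the
    edge [h01] acts faithfully. *)
Section Tetrahedron.
Variables (p0 p1 p2 p3 : cob P)
  (h01 : hom (mom A p0) (mom A p1)) (h12 : hom (mom A p1) (mom A p2))
  (h23 : hom (mom A p2) (mom A p3)) (h02 : hom (mom A p0) (mom A p2))
  (h13 : hom (mom A p1) (mom A p3)) (h03 h03' : hom (mom A p0) (mom A p3))
  (psi01 : chom p0 (act A p1 h01 erefl)) (psi12 : chom p1 (act A p2 h12 erefl))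
  (psi23 : chom p2 (act A p3 h23 erefl)) (psi02 : chom p0 (act A p2 h02 erefl))
  (psi13 : chom p1 (act A p3 h13 erefl)) (psi03 : chom p0 (act A p3 h03 erefl))
  (psi03' : chom p0 (act A p3 h03' erefl))
  (b012 : cell (comp1 h12 h01) h02) (b123 : cell (comp1 h23 h12) h13)
  (b013 : cell (comp1 h13 h01) h03) (b023 : cell (comp1 h23 h02) h03')
  (t : cell h03 h03')
  (Ht : ccomp (actm A (cid p3) erefl erefl t) psi03 = psi03')
  (Hcoc : vcomp t (vcomp b013 (hcomp2 b123 (id2 h01)))
          = vcomp b023 (vcomp (hcomp2 (id2 h23) b012) (assoc h23 h12 h01))).

Local Notation u01 := (mkE psi01).
Local Notation u12 := (mkE psi12).
Local Notation u23 := (mkE psi23).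
Local Notation u03 := (mkE psi03).
Let L := ab_comp1 (ab_comp1 u23 u12) u01.

Lemma lifts_left_path (psi : chom p0 (act A p2 h02 erefl)) :
  Lifts (u := u01) (w := u12) (v := mkE psi) b012 ->
  ccomp (actm A (cid p3) erefl erefl (vcomp (hcomp2 (id2 h23) b012) (assoc h23 h12 h01)))
    (projT2 L) = projT2 (ab_comp1 u23 (mkE psi)).
Proof.
move=> H; exact: (proj2_sig (ab_vcomp
  (ab_hcomp2 (ab_id2 u23) (exist _ b012 H : ab_cell (ab_comp1 u12 u01) (mkE psi)))
  (ab_assoc u23 u12 u01))).
Qed.

Lemma lifts_right_path (psi : chom p1 (act A p3 h13 erefl)) :
  Lifts (u := u12) (w := u23) (v := mkE psi) b123 ->
  ccomp (actm A (cid p3) erefl erefl (hcomp2 b123 (id2 h01))) (projT2 L)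
  = projT2 (ab_comp1 (mkE psi) u01).
Proof.
move=> H; exact: (proj2_sig
  (ab_hcomp2 (exist _ b123 H : ab_cell (ab_comp1 u23 u12) (mkE psi)) (ab_id2 u01))).
Qed.

Lemma tetra_paths (psi : chom p0 (act A p2 h02 erefl)) (phi : chom p1 (act A p3 h13 erefl)) :
  Lifts (u := u01) (w := u12) (v := mkE psi) b012 ->
  Lifts (u := u12) (w := u23) (v := mkE phi) b123 ->
  ccomp (actm A (cid p3) erefl erefl t)
    (ccomp (actm A (cid p3) erefl erefl b013) (projT2 (ab_comp1 (mkE phi) u01)))
  = ccomp (actm A (cid p3) erefl erefl b023) (projT2 (ab_comp1 u23 (mkE psi))).
Proof.
move=> H02 H13; rewrite -(lifts_left_path H02) -(lifts_right_path H13).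
by rewrite !(c_assoc PA) -!actm_cid_comp -(v_assoc BA) Hcoc.
Qed.

Local Notation C012 := (Lifts (u := u01) (w := u12) (v := mkE psi02) b012).
Local Notation C123 := (Lifts (u := u12) (w := u23) (v := mkE psi13) b123).
Local Notation C013 := (Lifts (u := u01) (w := mkE psi13) (v := u03) b013).
Local Notation C023 := (Lifts (u := mkE psi02) (w := u23) (v := mkE psi03') b023).

Lemma tetra_lifts_023 : C012 -> C123 -> C013 -> C023.
Proof. by move=> H012 H123 H013; rewrite /Lifts -(tetra_paths H012 H123) H013 Ht. Qed.

Lemma tetra_lifts_013 : C012 -> C123 -> C023 -> C013.
Proof.
move=> H012 H123 H023; apply: (@groupoid_mono _ _ _ (actm A (cid p3) erefl erefl t)).
by rewrite /Lifts /= in H023 *; rewrite Ht -H023 -(tetra_paths H012 H123).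
Qed.

Lemma tetra_lifts_012 : C123 -> C013 -> C023 -> C012.
Proof.
move=> H123 H013 H023.
pose psi := ccomp (actm A (cid p2) erefl erefl b012) (projT2 (ab_comp1 u12 u01)).
have E1 : projT2 (ab_comp1 u23 (mkE psi)) = projT2 (ab_comp1 u23 (mkE psi02)).
  apply: (@groupoid_mono _ _ _ (actm A (cid p3) erefl erefl b023)).
  by rewrite -(tetra_paths (psi := psi) _ H123) // H013 Ht H023.
by move: E1 => /= /groupoid_mono /groupoid_mono.
Qed.

Lemma tetra_lifts_123 : Faithful h01 -> C012 -> C013 -> C023 -> C123.
Proof.
move=> F01 H012 H013 H023.
pose phi := ccomp (actm A (cid p3) erefl erefl b123) (projT2 (ab_comp1 u23 u12)).
have E1 : projT2 (ab_comp1 (mkE phi) u01) = projT2 (ab_comp1 (mkE psi13) u01).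
  apply: (@groupoid_mono _ _ _ (actm A (cid p3) erefl erefl b013)).
  apply: (@groupoid_mono _ _ _ (actm A (cid p3) erefl erefl t)).
  by rewrite (tetra_paths (phi := phi) H012) // H013 Ht H023.
by move: E1 => /= /groupoid_mono /groupoid_epi /F01.
Qed.

End Tetrahedron.

Lemma exists_unique_eq (T : Type) (Q : T -> Prop) (a b : T) :
  (exists! x, Q x) -> Q a -> Q b -> a = b.
Proof. by case=> x [_ Ux] /Ux <- /Ux. Qed.

Section TriangleCompletion.
Variables (p0 p1 p2 : cob P).

Lemma complete_02 (u01 : ab_hom A p0 p1) (u12 : ab_hom A p1 p2) (h : hom (mom A p0) (mom A p2))
  (be : cell (comp1 (projT1 u12) (projT1 u01)) h) :
  exists! psi, Lifts (v := mkE (h := h) psi) be.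
Proof.
exists (ccomp (actm A (cid p2) erefl erefl be) (projT2 (ab_comp1 u12 u01))).
by split=> // psi.
Qed.

Lemma complete_01 (u12 : ab_hom A p1 p2) (u02 : ab_hom A p0 p2) (h : hom (mom A p0) (mom A p1))
  (be : cell (comp1 (projT1 u12) h) (projT1 u02)) :
  exists! psi, Lifts (u := mkE (h := h) psi) be.
Proof.
rewrite /Lifts /ab_comp1 /=.
have [c Hc] := groupoid_solve_l (ccomp (actm A (cid p2) erefl erefl be)
   (ccomp (kappa A p2 (projT1 u12) h erefl (mom_act A p2 (projT1 u12) erefl))
       (actm A (projT2 u12) erefl (mom_act A p2 (projT1 u12) erefl) (id2 h)))) (projT2 u02).
exists c; split; first by rewrite -Hc !(c_assoc PA).
by move=> c'; rewrite -Hc !(c_assoc PA) => /groupoid_mono ->.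
Qed.

Lemma complete_12 (u01 : ab_hom A p0 p1) (u02 : ab_hom A p0 p2) (h : hom (mom A p1) (mom A p2))
  (be : cell (comp1 h (projT1 u01)) (projT1 u02)) :
  Faithful (projT1 u01) -> Full (projT1 u01) ->
  exists! psi, Lifts (w := mkE (h := h) psi) be.
Proof.
move=> Fa Fu; rewrite /Lifts /ab_comp1 /=.
have [c Hc] := groupoid_solve_l (ccomp (actm A (cid p2) erefl erefl be)
   (kappa A p2 h (projT1 u01) erefl (mom_act A p2 h erefl))) (projT2 u02).
have [c' Hc'] := groupoid_solve_r (projT2 u01) c.
have [a Ha] := Fu _ _ erefl (mom_act A p2 h erefl) c'.
exists a; split; first by rewrite Ha Hc' -Hc !(c_assoc PA).
by move=> a'; rewrite -Hc -(c_assoc PA) -Hc' -Ha => /groupoid_mono/groupoid_mono/groupoid_epi/Fa ->.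
Qed.

End TriangleCompletion.

End ActionCells.

(** The face of [[s+2]] opposite [m] is the
    image of [lift m : [s+1] → [s+2]]; [fpos m v] is the position of a
    vertex [v ≠ m] in that face, and [fpos2 a b v] the position of
    [v ∉ {a, b}] in the common face of the faces opposite [a < b]. *)
Section FacePositions.
Variable s : nat.

Definition fpos (m v : 'I_s.+3) : 'I_s.+2 := inord (unbump m v).
Definition fpos2 (a b v : 'I_s.+3) : 'I_s.+1 := inord (unbump a (unbump b v)).

Lemma fpos_val (m v : 'I_s.+3) : v != m -> fpos m v = unbump m v :> nat.
Proof.
move=> vm; rewrite /fpos inordK //; move: (ltn_ord v) (ltn_ord m) vm.
by rewrite -val_eqE /= /unbump; lia.
Qed.

Lemma lift_fpos (m v : 'I_s.+3) : v != m -> lift m (fpos m v) = v.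
Proof.
move=> vm; apply: val_inj; rewrite /= fpos_val //; move: vm.
by rewrite -val_eqE /= /bump /unbump; lia.
Qed.

Lemma fpos_lift (m : 'I_s.+3) (a : 'I_s.+2) : fpos m (lift m a) = a.
Proof. by apply: val_inj; rewrite /= fpos_val ?bumpK // eq_sym neq_lift. Qed.

Lemma fpos_mono (m v w : 'I_s.+3) : v != m -> w != m -> v <= w -> fpos m v <= fpos m w.
Proof. by move=> vm wm; rewrite fpos_val // fpos_val // /unbump; lia. Qed.

Lemma fpos2_val (a b v : 'I_s.+3) : a < b -> v != a -> v != b ->
  fpos2 a b v = unbump a (unbump b v) :> nat.
Proof.
move=> ab va vb; rewrite /fpos2 inordK //; move: (ltn_ord v) (ltn_ord b) va vb.
by rewrite -!val_eqE /= /unbump; lia.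
Qed.

(* the two factorisations of the double face, [δ_b δ_a = δ_a δ_(b-1)] *)
Lemma lift_fpos2_l (a b v : 'I_s.+3) : a < b -> v != a -> v != b ->
  lift (inord a) (fpos2 a b v) = fpos b v.
Proof.
move=> ab va vb; apply: val_inj; rewrite /= fpos_val // fpos2_val // inordK.
  by move: va vb; rewrite -!val_eqE /= /bump /unbump; lia.
by move: (ltn_ord b); lia.
Qed.

Lemma lift_fpos2_r (a b v : 'I_s.+3) : a < b -> v != a -> v != b ->
  lift (inord b.-1) (fpos2 a b v) = fpos a v.
Proof.
move=> ab va vb; apply: val_inj; rewrite /= fpos_val // fpos2_val // inordK.
  by move: va vb; rewrite -!val_eqE /= /bump /unbump; lia.
by move: (ltn_ord b); lia.
Qed.

Lemma fpos2_mono (a b v w : 'I_s.+3) : a < b -> v != a -> v != b -> w != a -> w != b ->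
  v <= w -> fpos2 a b v <= fpos2 a b w.
Proof. by move=> ab va vb wa wb; rewrite !fpos2_val // /unbump; lia. Qed.

End FacePositions.

Lemma third_vertex (n : nat) (x y : 'I_n.+3) : exists2 m : 'I_n.+3, m != x & m != y.
Proof.
pose v := if (x != 0 :> nat) && (y != 0 :> nat) then 0
          else if (x != 1 :> nat) && (y != 1 :> nat) then 1 else 2.
have vn : v < n.+3 by rewrite /v; case: ifP => // _; case: ifP.
exists (Ordinal vn); rewrite -val_eqE /= /= /v;
  case: ifP => [|/negbT]; try case: ifP => [|/negbT]; lia.
Qed.

Section HornFaces.
Variables (D : BicatData) (s : nat) (k : 'I_s.+3)
  (hrn : forall j : 'I_s.+3, j != k -> Nerve D s.+2).
Hypothesis Hc : forall (i j : 'I_s.+3) (hi : i != k) (hj : j != k), i < j ->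
  dface (inord i) (proj1_sig (hrn hj)) = dface (inord j.-1) (proj1_sig (hrn hi)).

Definition face (j : 'I_s.+3) (hj : j != k) : HomData (PosetBicat s.+2) D := proj1_sig (hrn hj).

Lemma face_pi (j : 'I_s.+3) (h1 h2 : j != k) : face h1 = face h2.
Proof. by rewrite (bool_irrelevance h1 h2). Qed.

Lemma horn_vertex_agree (a b : 'I_s.+3) (ha : a != k) (hb : b != k) (v : 'I_s.+3) :
  v != a -> v != b -> F0 (face ha) (fpos a v) = F0 (face hb) (fpos b v).
Proof.
wlog ab : a b ha hb / a < b.
  move=> W va vb; case: (ltngtP a b) => [ab|ba|/val_inj eab]; first exact: W.
    by symmetry; apply: W.
  by subst b; rewrite (face_pi ha hb).
move=> va vb.
rewrite -(lift_fpos2_l ab va vb) -(lift_fpos2_r ab va vb).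
exact: esym (hom_eq0 (Hc ha hb ab) (fpos2 a b v)).
Qed.

Lemma horn_edge_agree (a b : 'I_s.+3) (ha : a != k) (hb : b != k) (v w : 'I_s.+3)
  (h1 : fpos a v <= fpos a w) (h2 : fpos b v <= fpos b w) :
  v <= w -> v != a -> v != b -> w != a -> w != b ->
  tot1 (@F1 _ _ (face ha) _ _ h1) = tot1 (@F1 _ _ (face hb) _ _ h2).
Proof.
wlog ab : a b ha hb h1 h2 / a < b.
  move=> W vw va vb wa wb; case: (ltngtP a b) => [ab|ba|/val_inj eab]; first exact: W.
    by symmetry; apply: W.
  by subst b; rewrite (face_pi ha hb); exact: F1_idx.
move=> vw va vb wa wb.
have h := fpos2_mono ab va vb wa wb vw.
rewrite (F1_idx _ h1 (lift_mono (inord b.-1) h)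
           (esym (lift_fpos2_r ab va vb)) (esym (lift_fpos2_r ab wa wb))).
rewrite -(hom_eq1 (Hc ha hb ab) h).
exact: F1_idx (lift_fpos2_l ab va vb) (lift_fpos2_l ab wa wb).
Qed.

Lemma horn_vertices : exists V : 'I_s.+3 -> ob D,
  forall (v m : 'I_s.+3) (hm : m != k), m != v -> F0 (face hm) (fpos m v) = V v.
Proof.
have HV (v : 'I_s.+3) :
    exists p, forall m (hm : m != k), m != v -> F0 (face hm) (fpos m v) = p.
  have [m0 m0k m0v] := third_vertex k v.
  by exists (F0 (face m0k) (fpos m0 v)) => m hm mv; apply: horn_vertex_agree; rewrite eq_sym.
exists (fun v => proj1_sig (constructive_indefinite_description _ (HV v))).
by move=> v; exact: (proj2_sig (constructive_indefinite_description _ (HV v))).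
Qed.

End HornFaces.

(** Throughout, a
    [k]-horn of [N_2(P ◁ B)] in dimension [s+2] lies over an
    [(s+2)]-simplex [Y] of [N_2(B)], whose vertices are the momenta of
    objects [pt v] of [P] read off the horn. *)
Section Filler.
Variables (B : Bicat) (P : Cat) (A : RightAction B P).
Local Notation E := (ActionBicat A).
Local Notation PB := PosetBicat.
Let BA := baxioms B.
Let PA := caxioms P.
Hypotheses (HB : isBigroupoid B) (HP : isGroupoid P).
Variables (s : nat) (k : 'I_s.+3) (hrn : forall j : 'I_s.+3, j != k -> Nerve E s.+2).
Variable pt : 'I_s.+3 -> cob P.
Variables
 (y1 : forall (i j : 'I_s.+3), @hom (PB s.+3) i j -> @hom B (mom A (pt i)) (mom A (pt j)))
 (y2 : forall (i j : 'I_s.+3) (f g : @hom (PB s.+3) i j), @cell (PB s.+3) i j f g ->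
    cell (y1 f) (y1 g))
 (yc : forall (i j l : 'I_s.+3) (f : @hom (PB s.+3) i j) (g : @hom (PB s.+3) j l),
     cell (comp1 (y1 g) (y1 f)) (y1 (comp1 g f)))
 (yu : forall i : 'I_s.+3, cell (id1 (mom A (pt i))) (y1 (@id1 (PB s.+3) i))).

Definition Y : HomData (PB s.+3) B := Build_HomData (PB s.+3) B (fun v => mom A (pt v)) y1 y2 yc yu.

Hypotheses (YH : isHom Y) (YN : isNormal Y).
Hypothesis Hc : forall (i j : 'I_s.+3) (hi : i != k) (hj : j != k), i < j ->
  dface (inord i) (proj1_sig (hrn hj)) = dface (inord j.-1) (proj1_sig (hrn hi)).
Hypothesis Hp : forall (j : 'I_s.+3) (hj : j != k), compH (projH A) (face hrn hj) = dface j Y.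
Hypothesis Hpt : forall (v m : 'I_s.+3) (hm : m != k), m != v -> F0 (face hrn hm) (fpos m v) = pt v.

Ltac ord_neq := rewrite -?val_eqE /=; lia.

Definition Edge (i j : 'I_s.+3) (h : i <= j) := chom (pt i) (act A (pt j) (y1 h) erefl).

Definition FaceSpec (i j : 'I_s.+3) (h : i <= j) (psi : Edge h) : Prop :=
  forall (m : 'I_s.+3) (hm : m != k) (h' : fpos m i <= fpos m j), m != i -> m != j ->
    etot (mkE psi) = @tot1 E _ _ (@F1 _ _ (face hrn hm) _ _ h').

(* no horn face contains the edge [i → j]; this happens only in dimension 2,
   for the edge opposite [k] *)
Definition NoFace (i j : 'I_s.+3) : Prop := forall m : 'I_s.+3, m != k -> (m == i) || (m == j).

Definition Good (a b : 'I_s.+3) (hab : a <= b) (pe : Edge hab)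
   (i j : 'I_s.+3) (h : i <= j) (psi : Edge h) : Prop :=
  FaceSpec pe /\ (a = i -> b = j -> etot (mkE pe) = etot (mkE psi)).

Definition TriLifts (a b c : 'I_s.+3) (hab : a <= b) (hbc : b <= c)
  (pab : Edge hab) (pbc : Edge hbc) (pac : Edge (leq_trans hab hbc)) : Prop :=
  Lifts (u := mkE pab) (w := mkE pbc) (v := mkE pac) (yc hab hbc).

Definition TriSpec (i j : 'I_s.+3) (h : i <= j) (psi : Edge h) : Prop :=
  forall (a b c : 'I_s.+3) (hab : a <= b) (hbc : b <= c), a < b -> b < c ->
  forall (pab : Edge hab) (pbc : Edge hbc) (pac : Edge (leq_trans hab hbc)),
    Good pab psi -> Good pbc psi -> Good pac psi -> TriLifts pab pbc pac.

Definition Spec (i j : 'I_s.+3) (h : i <= j) (psi : Edge h) : Prop :=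
  FaceSpec psi /\ (NoFace i j -> TriSpec psi).

Lemma face_edge_over (m : 'I_s.+3) (hm : m != k) (i j : 'I_s.+3) (h : i <= j)
  (h' : fpos m i <= fpos m j) :
  m != i -> m != j -> tot1 (projT1 (@F1 _ _ (face hrn hm) _ _ h')) = tot1 (y1 h).
Proof.
move=> mi mj; rewrite (hom_eq1 (Hp hm) h') /=.
by apply: (@F1_idx _ _ Y); apply: lift_fpos; rewrite eq_sym.
Qed.

Lemma face_comp_over (m : 'I_s.+3) (hm : m != k) (a b c : 'I_s.+2) (f : a <= b) (g : b <= c) :
  tot2 (proj1_sig (@Fcomp _ _ (face hrn hm) a b c f g))
  = tot2 (yc (lift_mono m f) (lift_mono m g)).
Proof.
have := hom_eq_comp (Hp hm) f g => /=; rewrite (v_idr BA) => ->.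
exact: (F2_vcomp_tot YH (v_idl BA)).
Qed.

Lemma face_edge (i j : 'I_s.+3) (h : i <= j) (m : 'I_s.+3) :
  m != k -> m != i -> m != j -> exists psi : Edge h, FaceSpec psi.
Proof.
move=> mk mi mj.
have h' : fpos m i <= fpos m j by apply: fpos_mono => //; rewrite eq_sym.
have [psi Hpsi] := retype (u' := @F1 _ _ (face hrn mk) _ _ h') (h := y1 h)
   (Hpt mk mi) (Hpt mk mj) (face_edge_over mk h h' mi mj).
exists psi => m' hm' h'' m'i m'j.
by rewrite Hpsi; apply: (horn_edge_agree Hc) => //; rewrite eq_sym.
Qed.

Lemma face_pin (i j : 'I_s.+3) (h : i <= j) (p1 p2 : Edge h) (m : 'I_s.+3) :
  m != k -> m != i -> m != j -> FaceSpec p1 -> FaceSpec p2 -> p1 = p2.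
Proof.
move=> mk mi mj H1 H2.
have h' : fpos m i <= fpos m j by apply: fpos_mono => //; rewrite eq_sym.
by apply: mkE_inj; rewrite (H1 m mk h' mi mj) (H2 m mk h' mi mj).
Qed.

Lemma good_pin (a b : 'I_s.+3) (hab : a <= b) (pe q : Edge hab)
  (i j : 'I_s.+3) (h : i <= j) (psi : Edge h) (m : 'I_s.+3) :
  Good pe psi -> FaceSpec q -> m != k -> m != a -> m != b -> pe = q.
Proof. by move=> [G _] Fq mk ma mb; exact: face_pin mk ma mb G Fq. Qed.

Lemma good_self (i j : 'I_s.+3) (h : i <= j) (pe psi : Edge h) : Good pe psi -> pe = psi.
Proof. by case=> _ G; apply: mkE_inj; exact: G. Qed.

Lemma noface_facts (i j : 'I_s.+3) : i <= j -> NoFace i j ->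
  [/\ i < j, i != k, j != k & forall m : 'I_s.+3, [|| m == i, m == j | m == k]].
Proof.
move=> ij NF; split.
- rewrite ltn_neqAle ij andbT; apply/negP => /eqP /val_inj eij; subst j.
  have [m mk mi] := third_vertex k i.
  by move: (NF m mk); rewrite (negbTE mi).
- apply/negP => /eqP ik; have [m mk mj] := third_vertex k j.
  by move: (NF m mk); rewrite ik (negbTE mk) (negbTE mj).
- apply/negP => /eqP jk; have [m mk mi] := third_vertex k i.
  by move: (NF m mk); rewrite jk (negbTE mk) (negbTE mi).
- move=> m; case: (eqVneq m k) => [_|mk]; first by rewrite !orbT.
  by case/orP: (NF m mk) => ->; rewrite ?orbT.
Qed.

Lemma sorted_triple (x y z a b c : 'I_s.+3) : x < y -> y < z -> a < b -> b < c ->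
  (forall m : 'I_s.+3, [|| m == x, m == y | m == z]) -> [/\ a = x, b = y & c = z].
Proof.
move=> xy yz ab bc Hall.
have H (m : 'I_s.+3) : m = x :> nat \/ m = y :> nat \/ m = z :> nat.
  by case/or3P: (Hall m) => /eqP ->; auto.
by move: (H a) (H b) (H c) => *; split; apply: val_inj => /=; lia.
Qed.

Lemma trispec_of_triangle (i j : 'I_s.+3) (h : i <= j) (psi : Edge h)
  (x y z : 'I_s.+3) (hxy : x <= y) (hyz : y <= z) :
  x < y -> y < z -> (forall m : 'I_s.+3, [|| m == x, m == y | m == z]) ->
  (forall (pxy : Edge hxy) (pyz : Edge hyz) (pxz : Edge (leq_trans hxy hyz)),
     Good pxy psi -> Good pyz psi -> Good pxz psi -> TriLifts pxy pyz pxz) ->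
  TriSpec psi.
Proof.
move=> xy yz Hall Hxyz a b c hab hbc ab bc pab pbc pac Gab Gbc Gac.
have [ea eb ec] := sorted_triple xy yz ab bc Hall; subst a b c.
rewrite (bool_irrelevance hab hxy) in pab Gab pac Gac *.
rewrite (bool_irrelevance hbc hyz) in pbc Gbc pac Gac *.
exact: Hxyz.
Qed.

Lemma face_or_noface (i j : 'I_s.+3) :
  (exists m : 'I_s.+3, [&& m != k, m != i & m != j]) \/ NoFace i j.
Proof.
case: (boolP [exists m, [&& m != k, m != i & m != j]]) => [/existsP|Hno]; [by left | right].
move=> m mk; move: Hno; rewrite negb_exists => /forallP /(_ m).
by rewrite mk /= negb_and !negbK.
Qed.

Lemma y1_fully_faithful (i j : 'I_s.+3) (h : i <= j) : Faithful A (y1 h) /\ Full A (y1 h).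
Proof. exact: (act_equiv_fully_faithful A HP (HB.2 _ _ (y1 h))). Qed.

(* an edge [i → j] opposite [k] (dimension 2) is obtained by completing the
   triangle on [i, j, k], whose other two edges lie in horn faces *)
Lemma noface_edge (i j : 'I_s.+3) (h : i <= j) : NoFace i j -> exists psi : Edge h, TriSpec psi.
Proof.
move=> NF; have [ij ik jk Hall] := noface_facts h NF.
have cover (x y z : 'I_s.+3) : [|| k == x, k == y | k == z] -> [|| i == x, i == y | i == z] ->
    [|| j == x, j == y | j == z] -> forall m : 'I_s.+3, [|| m == x, m == y | m == z].
  by move=> Hk Hi Hj m; case/or3P: (Hall m) => /eqP ->.
case: (ltngtP k i) => [ki | ik' | /val_inj eki]; last by rewrite eki eqxx in ik.
-
  have hki : k <= i := ltnW ki.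
  have [p01 F01] := face_edge hki jk (ltac:(ord_neq)) (ltac:(ord_neq)).
  have [p02 F02] := face_edge (leq_trans hki h) ik (ltac:(ord_neq)) (ltac:(ord_neq)).
  have [Fa Fu] := y1_fully_faithful hki.
  have [psi [Hpsi _]] := complete_12 HP (u01 := mkE p01) (u02 := mkE p02) (yc hki h) Fa Fu.
  exists psi; apply: (trispec_of_triangle ki ij); first by apply: cover; rewrite !eqxx ?orbT.
  move=> pab pbc pac Gab Gbc Gac.
  by rewrite (good_pin Gab F01 jk (ltac:(ord_neq)) (ltac:(ord_neq))) (good_self Gbc)
    (good_pin Gac F02 ik (ltac:(ord_neq)) (ltac:(ord_neq))).
case: (ltngtP k j) => [kj | jk' | /val_inj ekj]; last by rewrite ekj eqxx in jk.
-
  have [hik hkj] : i <= k /\ k <= j by split; apply: ltnW.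
  rewrite (bool_irrelevance h (leq_trans hik hkj)).
  have [p01 F01] := face_edge hik jk (ltac:(ord_neq)) (ltac:(ord_neq)).
  have [p12 F12] := face_edge hkj ik (ltac:(ord_neq)) (ltac:(ord_neq)).
  have [psi [Hpsi _]] := complete_02 (u01 := mkE p01) (u12 := mkE p12) (yc hik hkj).
  exists psi; apply: (trispec_of_triangle ik' kj); first by apply: cover; rewrite !eqxx ?orbT.
  move=> pab pbc pac Gab Gbc Gac.
  by rewrite (good_pin Gab F01 jk (ltac:(ord_neq)) (ltac:(ord_neq)))
    (good_pin Gbc F12 ik (ltac:(ord_neq)) (ltac:(ord_neq))) (good_self Gac).
-
  have hjk : j <= k := ltnW jk'.
  have [p12 F12] := face_edge hjk ik (ltac:(ord_neq)) (ltac:(ord_neq)).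
  have [p02 F02] := face_edge (leq_trans h hjk) jk (ltac:(ord_neq)) (ltac:(ord_neq)).
  have [psi [Hpsi _]] := complete_01 HP (u12 := mkE p12) (u02 := mkE p02) (yc h hjk).
  exists psi; apply: (trispec_of_triangle ij jk'); first by apply: cover; rewrite !eqxx ?orbT.
  move=> pab pbc pac Gab Gbc Gac.
  by rewrite (good_self Gab) (good_pin Gbc F12 ik (ltac:(ord_neq)) (ltac:(ord_neq)))
    (good_pin Gac F02 jk (ltac:(ord_neq)) (ltac:(ord_neq))).
Qed.

Lemma edge_exists (i j : 'I_s.+3) (h : i <= j) : exists psi : Edge h, Spec psi.
Proof.
case: (face_or_noface i j) => [[m /and3P [mk mi mj]] | NF].
  have [psi Hpsi] := face_edge h mk mi mj.
  by exists psi; split => // NF; move: (NF m mk); rewrite (negbTE mi) (negbTE mj).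
have [psi Hpsi] := noface_edge h NF.
exists psi; split => // m mk h' mi mj.
by move: (NF m mk); rewrite (negbTE mi) (negbTE mj).
Qed.

(** The substance is that every
    triangle lifts ([triangle_lifts_all]). *)
Section CandidateFiller.
Variable Psi : forall (i j : 'I_s.+3) (h : i <= j), Edge h.
Hypothesis HPsi : forall (i j : 'I_s.+3) (h : i <= j), Spec (Psi h).

Definition X1 (i j : 'I_s.+3) (h : @hom (PB s.+3) i j) : ab_hom A (pt i) (pt j) := mkE (Psi h).

Lemma X1_pi (i j : 'I_s.+3) (h h' : i <= j) : X1 h = X1 h'.
Proof. by rewrite (bool_irrelevance h h'). Qed.

(* degenerate edges are identities, since the horn faces are normal *)
Lemma X1_id (i : 'I_s.+3) (h : i <= i) : X1 h = ab_id1 A (pt i).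
Proof.
have [m mk mi] := third_vertex k i.
have h' : fpos m i <= fpos m i by [].
apply: etot_inj; rewrite /X1 ((HPsi h).1 m mk h' mi mi) (bool_irrelevance h' (leqnn _)).
case: ((proj2_sig (hrn mk)).2 (fpos m i)) => /= e _; rewrite [X in @tot1 _ _ _ X = _]e.
by apply: etot_id1; apply: Hpt.
Qed.

Definition TriangleLifts (a b c : 'I_s.+3) : Prop :=
  forall (hab : a <= b) (hbc : b <= c), TriLifts (Psi hab) (Psi hbc) (Psi (leq_trans hab hbc)).

Lemma X2_lifts (i j : 'I_s.+3) (p1 p2 : i <= j) (a : @cell (PB s.+3) i j p1 p2) :
  ccomp (actm A (cid (pt j)) erefl erefl (y2 a)) (Psi p1) = Psi p2.
Proof.
move: a; rewrite (bool_irrelevance p2 p1) => a.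
have -> : y2 a = id2 _ := F2_trivial YH a.
by rewrite actm_id (c_idl PA).
Qed.

Lemma triangle_in_face (a b c m : 'I_s.+3) :
  m != k -> m != a -> m != b -> m != c -> TriangleLifts a b c.
Proof.
move=> hm ma mb mc hab hbc; set X := face hrn hm.
have f' : fpos m a <= fpos m b by apply: fpos_mono => //; rewrite eq_sym.
have g' : fpos m b <= fpos m c by apply: fpos_mono => //; rewrite eq_sym.
apply: (lifts_transfer _ _ _ _ (proj2_sig (@Fcomp _ _ X _ _ _ f' g'))).
- by rewrite ((HPsi hab).1 m hm f' ma mb).
- by rewrite ((HPsi hbc).1 m hm g' mb mc).
- by rewrite ((HPsi (leq_trans hab hbc)).1 m hm (leq_trans f' g') ma mc).
- rewrite face_comp_over.
  by apply: (@Fcomp_idx _ _ Y); apply: lift_fpos; rewrite eq_sym.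
Qed.

Lemma y2_eq (i j : 'I_s.+3) (p1 p2 : i <= j) (a : @cell (PB s.+3) i j p1 p2)
  (ev : X1 p1 = X1 p2) : y2 a = eq2 (f_equal (@projT1 _ _) ev).
Proof.
move: a ev; rewrite (bool_irrelevance p2 p1) => a ev.
by rewrite (proof_irrelevance _ ev erefl); exact: (F2_trivial YH a).
Qed.

Lemma yu_eq (i : 'I_s.+3) (e : projT1 (X1 (leqnn i)) = projT1 (ab_id1 A (pt i))) :
  yu i = eq2 (esym e).
Proof. by case: (YN i) => e' He'; rewrite (proof_irrelevance _ e e'); exact: He'. Qed.

(* degenerate triangles lift by the unit laws of [Y] *)
Lemma triangle_degenerate_l (i l : 'I_s.+3) : TriangleLifts i i l.
Proof.
move=> h1 h2; rewrite (bool_irrelevance h1 (leqnn i)).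
apply: (lifts_runit (e := X1_id (leqnn i)) (ev := X1_pi (leq_trans (leqnn i) h2) h2)).
rewrite -(yu_eq (i := i)) -(y2_eq (@runit (PB s.+3) i l h2)).
exact: (F_runit YH h2).
Qed.

Lemma triangle_degenerate_r (i l : 'I_s.+3) : TriangleLifts i l l.
Proof.
move=> h1 h2; rewrite (bool_irrelevance h2 (leqnn l)).
apply: (lifts_lunit (e := X1_id (leqnn l)) (ev := X1_pi (leq_trans h1 (leqnn l)) h1)).
rewrite -(yu_eq (i := l)) -(y2_eq (@lunit (PB s.+3) i l h1)).
exact: (F_lunit YH h1).
Qed.

Lemma cand_tetra_023 (a b c d : 'I_s.+3) : a <= b -> b <= c -> c <= d ->
  TriangleLifts a b c -> TriangleLifts b c d -> TriangleLifts a b d -> TriangleLifts a c d.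
Proof.
move=> hab hbc hcd H012 H123 H013 hac hcd'.
rewrite (bool_irrelevance hac (leq_trans hab hbc)) (bool_irrelevance hcd' hcd).
exact: (tetra_lifts_023 (X2_lifts (@assoc (PB s.+3) a b c d hcd hbc hab))
  (F_assoc YH hab hbc hcd) (H012 _ _) (H123 _ _) (H013 _ _)).
Qed.

Lemma cand_tetra_013 (a b c d : 'I_s.+3) : a <= b -> b <= c -> c <= d ->
  TriangleLifts a b c -> TriangleLifts b c d -> TriangleLifts a c d -> TriangleLifts a b d.
Proof.
move=> hab hbc hcd H012 H123 H023 hab' hbd.
rewrite (bool_irrelevance hab' hab) (bool_irrelevance hbd (leq_trans hbc hcd)).
exact: (tetra_lifts_013 HP (X2_lifts (@assoc (PB s.+3) a b c d hcd hbc hab))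
  (F_assoc YH hab hbc hcd) (H012 _ _) (H123 _ _) (H023 _ _)).
Qed.

Lemma cand_tetra_012 (a b c d : 'I_s.+3) : a <= b -> b <= c -> c <= d ->
  TriangleLifts b c d -> TriangleLifts a b d -> TriangleLifts a c d -> TriangleLifts a b c.
Proof.
move=> hab hbc hcd H123 H013 H023 hab' hbc'.
rewrite (bool_irrelevance hab' hab) (bool_irrelevance hbc' hbc).
exact: (tetra_lifts_012 HP (X2_lifts (@assoc (PB s.+3) a b c d hcd hbc hab))
  (F_assoc YH hab hbc hcd) (H123 _ _) (H013 _ _) (H023 _ _)).
Qed.

Lemma cand_tetra_123 (a b c d : 'I_s.+3) (hab : a <= b) : b <= c -> c <= d ->
  Faithful A (y1 hab) ->
  TriangleLifts a b c -> TriangleLifts a b d -> TriangleLifts a c d -> TriangleLifts b c d.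
Proof.
move=> hbc hcd Fa H012 H013 H023 hbc' hcd'.
rewrite (bool_irrelevance hbc' hbc) (bool_irrelevance hcd' hcd).
exact: (tetra_lifts_123 HP (X2_lifts (@assoc (PB s.+3) a b c d hcd hbc hab))
  (F_assoc YH hab hbc hcd) Fa (H012 _ _) (H013 _ _) (H023 _ _)).
Qed.

Ltac in_face m := apply: (triangle_in_face (m := m)); ord_neq.

(* a triangle avoiding [k] is a face of the tetrahedron it spans with [k],
   whose three other faces lie in horn faces *)
Lemma triangle_avoiding_k (a b c : 'I_s.+3) :
  a < b -> b < c -> k != a -> k != b -> k != c -> TriangleLifts a b c.
Proof.
move=> ab bc ka kb kc; have [hab hbc] : a <= b /\ b <= c by split; apply: ltnW.
case: (ltngtP k a) => [lt_ka | lt_ak | /val_inj eka]; last by rewrite eka eqxx in ka.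
  have hka : k <= a := ltnW lt_ka.
  by refine (cand_tetra_123 hab hbc (y1_fully_faithful hka).1 _ _ _);
    [in_face c | in_face b | in_face a].
case: (ltngtP k b) => [lt_kb | lt_bk | /val_inj ekb]; last by rewrite ekb eqxx in kb.
  have [hak hkb] : a <= k /\ k <= b by split; apply: ltnW.
  by refine (cand_tetra_023 hak hkb hbc _ _ _); [in_face c | in_face a | in_face b].
case: (ltngtP k c) => [lt_kc | lt_ck | /val_inj ekc]; last by rewrite ekc eqxx in kc.
  have [hbk hkc] : b <= k /\ k <= c by split; apply: ltnW.
  by refine (cand_tetra_013 hab hbk hkc _ _ _); [in_face c | in_face a | in_face b].
have hck : c <= k := ltnW lt_ck.
by refine (cand_tetra_012 hab hbc hck _ _ _); [in_face a | in_face c | in_face b].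
Qed.

Lemma good_refl (i j : 'I_s.+3) (h : i <= j) : Good (Psi h) (Psi h).
Proof. by split; [exact: (HPsi h).1 |]. Qed.

Lemma good_ne (a b : 'I_s.+3) (hab : a <= b) (i j : 'I_s.+3) (h : i <= j) :
  (a != i) || (b != j) -> Good (Psi hab) (Psi h).
Proof. by move=> H; split=> [|ea eb]; [exact: (HPsi hab).1 | subst; rewrite !eqxx in H]. Qed.

(* in dimension 2 the only triangle is [a, b, c] with [k] among its vertices;
   it lifts by the choice of its edge opposite [k] *)
Lemma triangle_through_k (a b c : 'I_s.+3) : a < b -> b < c ->
  (forall m : 'I_s.+3, m != k -> [|| m == a, m == b | m == c]) ->
  [|| k == a, k == b | k == c] -> TriangleLifts a b c.
Proof.
move=> ab bc Hall Hk hab hbc.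
case/or3P: Hk => /eqP ek.
- have NF : NoFace b c.
    move=> m mk; case/or3P: (Hall m mk) => [/eqP ema | -> | ->]; rewrite ?orbT //.
    by rewrite ema -ek eqxx in mk.
  apply: ((HPsi hbc).2 NF a b c hab hbc ab bc); 
    first [exact: good_refl | apply: good_ne; ord_neq].
- have NF : NoFace a c.
    move=> m mk; case/or3P: (Hall m mk) => [-> | /eqP emb | ->]; rewrite ?orbT //.
    by rewrite emb -ek eqxx in mk.
  apply: ((HPsi (leq_trans hab hbc)).2 NF a b c hab hbc ab bc); 
    first [exact: good_refl | apply: good_ne; ord_neq].
- have NF : NoFace a b.
    move=> m mk; case/or3P: (Hall m mk) => [-> | -> | /eqP emc]; rewrite ?orbT //.
    by rewrite emc -ek eqxx in mk.
  apply: ((HPsi hab).2 NF a b c hab hbc ab bc); 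
    first [exact: good_refl | apply: good_ne; ord_neq].
Qed.

Lemma triangle_lifts_all (a b c : 'I_s.+3) : TriangleLifts a b c.
Proof.
case: (eqVneq a b) => [<- | nab]; first exact: triangle_degenerate_l.
case: (eqVneq b c) => [<- | nbc]; first exact: triangle_degenerate_r.
move=> hab hbc.
have ab : a < b by rewrite ltn_neqAle nab hab.
have bc : b < c by rewrite ltn_neqAle nbc hbc.
case: (boolP [exists m, [&& m != k, m != a, m != b & m != c]]) =>
  [/existsP [m /and4P [mk ma mb mc]] | Hno].
  exact: (triangle_in_face mk ma mb mc).
have Hall (m : 'I_s.+3) : m != k -> [|| m == a, m == b | m == c].
  move=> mk; move: Hno; rewrite negb_exists => /forallP /(_ m).
  by rewrite mk /= !negb_and !negbK orbA.
case: (boolP [|| k == a, k == b | k == c]) => [Hk | ].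
  exact: triangle_through_k.
by rewrite !negb_or => /and3P [ka kb kc]; exact: triangle_avoiding_k.
Qed.

Definition X2 (i j : 'I_s.+3) (f g : @hom (PB s.+3) i j) (a : @cell (PB s.+3) i j f g) :
  ab_cell (X1 f) (X1 g) := exist _ (y2 a) (X2_lifts a).

Definition Xc (i j l : 'I_s.+3) (f : @hom (PB s.+3) i j) (g : @hom (PB s.+3) j l) :
  ab_cell (ab_comp1 (X1 g) (X1 f)) (X1 (comp1 g f)) :=
  exist _ (yc f g) (triangle_lifts_all f g).

Definition Xu (i : 'I_s.+3) : ab_cell (ab_id1 A (pt i)) (X1 (leqnn i)) :=
  @eq2 E _ _ _ _ (esym (X1_id (leqnn i))).

Definition X0 : HomData (PB s.+3) E := Build_HomData (PB s.+3) E pt X1 X2 Xc Xu.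

Lemma Xu_over (i : 'I_s.+3) : proj1_sig (Xu i) = yu i.
Proof.
rewrite /Xu (yu_eq (i := i) (f_equal (@projT1 _ _) (X1_id (leqnn i)))).
by case: _ / X1_id.
Qed.

(* all 2-cells of [X0] are those of [Y], so the axioms are inherited *)
Lemma X0_hom : isHom X0.
Proof.
split.
- by move=> i j f; apply: ab_cell_eq; exact: (F2_id YH f).
- by move=> i j f g h b a; apply: ab_cell_eq; exact: (F2_comp YH b a).
- by move=> i j l f f' g g' a b; apply: ab_cell_eq; exact: (Fcomp_nat YH a b).
- by move=> w i j l f g h; apply: ab_cell_eq; exact: (F_assoc YH f g h).
- by move=> i j f; apply: ab_cell_eq; rewrite /= Xu_over; exact: (F_lunit YH f).
- by move=> i j f; apply: ab_cell_eq; rewrite /= Xu_over; exact: (F_runit YH f).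
- by move=> i j l f g; exact: (ab_cell_iso HB.1).
- by move=> i; exact: (ab_cell_iso HB.1).
Qed.

Lemma X0_normal : isNormal X0.
Proof. by move=> i; exists (X1_id (leqnn i)). Qed.

Lemma X0_over : compH (projH A) X0 = Y.
Proof.
rewrite /compH /projH /X0 /Y /=.
have -> : (fun (x y z : 'I_s.+3) (f : @hom (PB s.+3) x y) (g : @hom (PB s.+3) y z) =>
    vcomp (proj1_sig (Xc f g)) (id2 (comp1 (projT1 (X1 g)) (projT1 (X1 f))))) = yc.
  by do 5 (apply: functional_extensionality_dep => ?); exact: (v_idr BA).
have -> : (fun x : 'I_s.+3 => vcomp (proj1_sig (Xu x)) (id2 (id1 (mom A (pt x))))) = yu.
  by apply: functional_extensionality_dep => ?; rewrite (v_idr BA) Xu_over.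
done.
Qed.

Lemma X1_face (j : 'I_s.+3) (hj : j != k) (a b : 'I_s.+2) (h1 : lift j a <= lift j b)
  (h2 : a <= b) : etot (X1 h1) = tot1 (@F1 _ _ (face hrn hj) a b h2).
Proof.
have h' : fpos j (lift j a) <= fpos j (lift j b) by rewrite !fpos_lift.
rewrite /X1 ((HPsi h1).1 j hj h' (neq_lift _ _) (neq_lift _ _)).
by apply: F1_idx; exact: fpos_lift.
Qed.

Lemma X0_face (j : 'I_s.+3) (hj : j != k) : dface j X0 = face hrn hj.
Proof.
have vidl (x y : ob E) (f g : hom x y) (a : cell f g) : vcomp (id2 g) a = a.
  by apply: ab_cell_eq; exact: (v_idl BA).
apply: hom_ext.
- by move=> a /=; rewrite -(Hpt hj (neq_lift j a)) fpos_lift.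
- by move=> a b h /=; exact: X1_face.
- move=> a b h1 h2 c /=.
  rewrite (F2_tot X0_hom) (F2_tot (proj2_sig (hrn hj)).1).
  by apply: tot2_id2; exact: X1_face.
- move=> a b c f g /=.
  rewrite (F2_vcomp_tot X0_hom vidl).
  by apply: ab_tot2; [apply: etot_comp | | rewrite face_comp_over]; try exact: X1_face.
- move=> a /=.
  rewrite (F2_vcomp_tot X0_hom vidl) (Funit_tot _ X0_normal) (Funit_tot _ (proj2_sig (hrn hj)).2).
  by apply: tot2_id1 => /=; rewrite -(Hpt hj (neq_lift j a)) fpos_lift.
Qed.

(** Any filler [X] over [Y] coincides with [X0]: its vertices and the edges
    lying in horn faces are forced, and the remaining edge (dimension 2) is
    forced by the uniqueness of triangle completions. *)
Section Uniqueness.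
Variable X : HomData (PB s.+3) E.
Hypotheses (HX : isHom X) (NX : isNormal X).
Hypothesis HXface : forall (j : 'I_s.+3) (hj : j != k), dface j X = face hrn hj.
Hypothesis HXover : compH (projH A) X = Y.

Lemma X_vertex (v : 'I_s.+3) : pt v = F0 X v.
Proof.
have [m mk mv] := third_vertex k v.
rewrite -(Hpt mk mv) -(hom_eq0 (HXface mk) (fpos m v)) /= lift_fpos //.
by rewrite eq_sym.
Qed.

Lemma X_edge_face (i j : 'I_s.+3) (h : i <= j) (m : 'I_s.+3) :
  m != k -> m != i -> m != j -> etot (X1 h) = tot1 (F1 X h).
Proof.
move=> mk mi mj.
have h' : fpos m i <= fpos m j by apply: fpos_mono => //; rewrite eq_sym.
rewrite /X1 ((HPsi h).1 m mk h' mi mj) -(hom_eq1 (HXface mk) h') /=.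
by apply: F1_idx; apply: lift_fpos; rewrite eq_sym.
Qed.

Lemma X_lifts (a b c : 'I_s.+3) (hab : a <= b) (hbc : b <= c)
  (pab : Edge hab) (pbc : Edge hbc) (pac : Edge (leq_trans hab hbc)) :
  etot (mkE pab) = tot1 (F1 X hab) -> etot (mkE pbc) = tot1 (F1 X hbc) ->
  etot (mkE pac) = tot1 (F1 X (leq_trans hab hbc)) -> TriLifts pab pbc pac.
Proof.
move=> Eab Ebc Eac.
apply: (lifts_transfer (esym Eab) (esym Ebc) (esym Eac) _ (proj2_sig (Fcomp X hab hbc))).
by have := hom_eq_comp HXover hab hbc => /=; rewrite (v_idr BA) => ->.
Qed.

Lemma X_edge_noface (i j : 'I_s.+3) (h : i <= j) : NoFace i j -> etot (X1 h) = tot1 (F1 X h).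
Proof.
move=> NF; have [ij ik jk _] := noface_facts h NF.
have [psi Hpsi] := retype (u' := F1 X h) (h := y1 h)
  (esym (X_vertex i)) (esym (X_vertex j)) (hom_eq1 HXover h).
suff Eps : Psi h = psi by rewrite /X1 Eps.
case: (ltngtP k i) => [ki | ik' | /val_inj eki]; last by rewrite eki eqxx in ik.
  have hki : k <= i := ltnW ki.
  have [Fa Fu] := y1_fully_faithful hki.
  apply: (exists_unique_eq (complete_12 HP (u01 := X1 hki) (u02 := X1 (leq_trans hki h))
    (yc hki h) Fa Fu) (triangle_lifts_all hki h)).
  by apply: X_lifts;
    [apply: (@X_edge_face _ _ _ j) | exact: Hpsi | apply: (@X_edge_face _ _ _ i)]; ord_neq.
case: (ltngtP k j) => [kj | jk' | /val_inj ekj]; last by rewrite ekj eqxx in jk.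
  have [hik hkj] : i <= k /\ k <= j by split; apply: ltnW.
  move: psi Hpsi; rewrite (bool_irrelevance h (leq_trans hik hkj)) => psi Hpsi.
  apply: (exists_unique_eq (complete_02 (u01 := X1 hik) (u12 := X1 hkj) (yc hik hkj))
    (triangle_lifts_all hik hkj)).
  by apply: X_lifts;
    [apply: (@X_edge_face _ _ _ j) | apply: (@X_edge_face _ _ _ i) | exact: Hpsi]; ord_neq.
have hjk : j <= k := ltnW jk'.
apply: (exists_unique_eq (complete_01 HP (u12 := X1 hjk) (u02 := X1 (leq_trans h hjk))
  (yc h hjk)) (triangle_lifts_all h hjk)).
by apply: X_lifts;
  [exact: Hpsi | apply: (@X_edge_face _ _ _ i) | apply: (@X_edge_face _ _ _ j)]; ord_neq.
Qed.

Lemma X_edge (i j : 'I_s.+3) (h : i <= j) : etot (X1 h) = tot1 (F1 X h).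
Proof.
case: (face_or_noface i j) => [[m /and3P [mk mi mj]] | NF]; last exact: X_edge_noface.
exact: (@X_edge_face i j h m mk mi mj).
Qed.

Lemma X0_unique : X0 = X.
Proof.
apply: hom_ext.
- exact: X_vertex.
- exact: X_edge.
- move=> i j h1 h2 c.
  by rewrite (F2_tot X0_hom) (F2_tot HX); apply: tot2_id2; exact: X_edge.
- move=> i j l f g.
  apply: ab_tot2; [apply: etot_comp | |]; try exact: X_edge.
  by have := hom_eq_comp HXover f g => /=; rewrite (v_idr BA) => ->.
- move=> i.
  by rewrite (Funit_tot _ X0_normal) (Funit_tot _ NX); apply: tot2_id1; exact: X_vertex.
Qed.

End Uniqueness.

End CandidateFiller.

Lemma horn_filler_unique : exists! x : Nerve E s.+3,
  (forall (j : 'I_s.+3) (hj : j != k), dface j (proj1_sig x) = proj1_sig (hrn hj))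
  /\ compH (projH A) (proj1_sig x) = Y.
Proof.
have [Psi HPsi] : exists Psi : (forall (i j : 'I_s.+3) (h : i <= j), Edge h),
    forall i j h, Spec (Psi i j h).
  exists (fun i j h => proj1_sig (constructive_indefinite_description _ (edge_exists h))).
  by move=> i j h; exact: (proj2_sig (constructive_indefinite_description _ (edge_exists h))).
exists (exist _ (X0 HPsi) (conj (X0_hom HPsi) (X0_normal HPsi))); split.
  by split; [move=> j hj; exact: X0_face | exact: X0_over].
move=> [X [HX NX]] /= [HXface HXover].
have EX := X0_unique HPsi HX NX HXface HXover; subst X.
by congr exist; apply: proof_irrelevance.
Qed.

End Filler.

Lemma horn_base_vertex (B : Bicat) (P : Cat) (A : RightAction B P) (s : nat) (k : 'I_s.+3)
  (hrn : forall j : 'I_s.+3, j != k -> Nerve (ActionBicat A) s.+2)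
  (Y : HomData (PosetBicat s.+3) B)
  (Hp : forall (j : 'I_s.+3) (hj : j != k), compH (projH A) (face hrn hj) = dface j Y)
  (V : 'I_s.+3 -> cob P)
  (HV : forall (v m : 'I_s.+3) (hm : m != k), m != v -> F0 (face hrn hm) (fpos m v) = V v)
  (v : 'I_s.+3) : F0 Y v = mom A (V v).
Proof.
have [m mk mv] := third_vertex k v.
have := hom_eq0 (Hp m mk) (fpos m v); rewrite /= lift_fpos 1?eq_sym // => <-.
by rewrite HV.
Qed.

Theorem theorem7p1 (B : Bicat) (P : Cat) (A : RightAction B P) :
  isBigroupoid B -> isGroupoid P ->
  forall n : nat, 2 <= n -> exact_fibration_dim (projH A) n.
Proof.
move=> HB HP [|[|s]] // _ k hrn y Hc Hp.
have [V HV] := horn_vertices Hc.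
case: y Hp => [[y0 y1 y2 yc yu] [YH YN]] /= Hp.
have Ey0 : y0 = (fun v => mom A (V v)) := functional_extensionality _ _ (horn_base_vertex Hp HV).
subst y0; exact: (horn_filler_unique HB HP YH YN Hc Hp HV).
Qed.
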